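(* Let $q>1$, $p=\frac{q}{q-1}$, and assume Hypothesis (H$_q$). Then for all $x\in[a,b]$ and $\theta>0$, $$\Big|\frac{(x-a)^\theta f(ma)+(b-x)^\theta f(mb)}{b-a}-\frac{\Gamma(\theta+1)}{m^\theta(b-a)}\Big[J^\theta_{(mx)^-}f(ma)+J^\theta_{(mx)^+}f(mb)\Big]\Big|$$ $$\le\frac{m\big(\frac1\theta\beta(p+1,\frac1\theta)\big)^{\frac1p}}{b-a}\Big\{(x-a)^{\theta+1}\Big(\frac{|f'(mx)|^q+\alpha m|f'(a)|^q}{\alpha+1}\Big)^{\frac1q}+(b-x)^{\theta+1}\Big(\frac{|f'(mx)|^q+\alpha m|f'(b)|^q}{\alpha+1}\Big)^{\frac1q}\Big\}.$$
   Context: Let $\Gamma$ denote Euler's Gamma function and $\beta(u,v)=\int_0^1t^{u-1}(1-t)^{v-1}dt$ the Beta function. For $\theta>0$ and $x\in[a,b]$: $J^\theta_{(mx)^-}f(ma)=\frac{1}{\Gamma(\theta)}\int_{ma}^{mx}(s-ma)^{\theta-1}f(s)\,ds$ and $J^\theta_{(mx)^+}f(mb)=\frac{1}{\Gamma(\theta)}\int_{mx}^{mb}(mb-s)^{\theta-1}f(s)\,ds$ (each equal to $0$ if its interval of integration is degenerate). $(\alpha,m)$-convexity: for $(\alpha,m)\in[0,1]\times(0,1]$ and an interval $K\subseteq[0,\infty)$, a function $g:K\to\mathbb{R}$ is $(\alpha,m)$-convex on $K$ if $g(tX+m(1-t)Y)\le t^\alpha g(X)+m(1-t^\alpha)g(Y)$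 for all $X,Y\in K$ and $t\in[0,1]$ with $tX+m(1-t)Y\in K$ (convention $0^0=1$). Hypothesis (H$_q$): $I\subseteq[0,\infty)$ is an interval, $f:I\to\mathbb{R}$ is differentiable on the interior $I^\circ$, $m\in(0,1]$, $\alpha\in[0,1]$, $a<b$ with $ma,b\in I^\circ$, $f'$ is Lebesgue integrable on $[ma,mb]$, and $|f'|^q$ is $(\alpha,m)$-convex on $[ma,b]$. *)

From Stdlib Require Import Reals Lra ClassicalEpsilon.
Open Scope R_scope.

(* Real power x^y for x >= 0, with the conventions 0^y = 0 for y <> 0 and
   0^0 = 1 (the paper's convention).  For x > 0 it is exp (y ln x). *)
Definition rpow (x y : R) : R :=
  if Rlt_dec 0 x then Rpower x y
  else if Req_EM_T y 0 then 1 else 0.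

Definition improper_int (f : R -> R) (a b l : R) : Prop :=
  (forall c d, a < c -> c <= d -> d < b -> inhabited (Riemann_integrable f c d)) /\
  forall eps, 0 < eps -> exists delta, 0 < delta /\
    forall c d (pr : Riemann_integrable f c d),
      a < c < a + delta -> b - delta < d < b -> Rabs (RiemannInt pr - l) < eps.

Definition improper_int_0inf (f : R -> R) (l : R) : Prop :=
  (forall c d, 0 < c -> c <= d -> inhabited (Riemann_integrable f c d)) /\
  forall eps, 0 < eps -> exists delta, 0 < delta /\ exists M,
    forall c d (pr : Riemann_integrable f c d),
      0 < c < delta -> M < d -> Rabs (RiemannInt pr - l) < eps.

(* The value of the integral (chosen by Hilbert's epsilon; the limit is unique). *)
Definition ImpInt (f : R -> R) (a b : R) : R :=
  epsilon (inhabits 0) (fun l => improper_int f a b l).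

Definition ImpInt_0inf (f : R -> R) : R :=
  epsilon (inhabits 0) (fun l => improper_int_0inf f l).

Definition Gamma (u : R) : R :=
  ImpInt_0inf (fun t => rpow t (u - 1) * exp (- t)).

Definition Beta (u v : R) : R :=
  ImpInt (fun t => rpow t (u - 1) * rpow (1 - t) (v - 1)) 0 1.

(* J^theta_{(X)^-} f(A) = 1/Gamma(theta) int_A^X (s-A)^(theta-1) f(s) ds,
   0 if the interval is degenerate. *)
Definition Jleft (theta : R) (f : R -> R) (A X : R) : R :=
  if Rlt_dec A X then / Gamma theta * ImpInt (fun s => rpow (s - A) (theta - 1) * f s) A X
  else 0.

(* J^theta_{(X)^+} f(B) = 1/Gamma(theta) int_X^B (B-s)^(theta-1) f(s) ds,
   0 if the interval is degenerate. *)
Definition Jright (theta : R) (f : R -> R) (X B : R) : R :=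
  if Rlt_dec X B then / Gamma theta * ImpInt (fun s => rpow (B - s) (theta - 1) * f s) X B
  else 0.

Definition is_interval (I : R -> Prop) : Prop :=
  forall x y z, I x -> I z -> x <= y <= z -> I y.

Definition alpha_m_convex (alpha m : R) (K : R -> Prop) (g : R -> R) : Prop :=
  forall X Y t, K X -> K Y -> 0 <= t <= 1 -> K (t * X + m * (1 - t) * Y) ->
    g (t * X + m * (1 - t) * Y) <= rpow t alpha * g X + m * (1 - rpow t alpha) * g Y.

From Stdlib Require Import Reals Rtopology Lra ClassicalEpsilon FunctionalExtensionality.
From Coquelicot Require Import Coquelicot.
Open Scope R_scope.

(* Write J for either fractional integral and E for the corresponding endpoint
   (a or b).  The change of variables s = m E + u m (x - E) gives
     Gamma (th + 1) J = (m |x - E|)^th (f (m E) + R_E),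
     R_E = th int_0^1 u^(th-1) (phi u - phi 0) du,  phi u = f (m E + u m (x - E)),
   so the left-hand side of the theorem is |(x-a)^th R_a + (b-x)^th R_b| / (b-a).
   Since |phi'| <= m |x - E| (u^alpha |f'(m x)|^q + m (1 - u^alpha) |f'(E)|^q)^(1/q)
   by convexity, the mean value theorem and an integration by parts give
     |R_E| <= m |x - E| int_0^1 (1 - u^th) (...)^(1/q) du,
   and Hoelder's inequality, int_0^1 (1 - u^th)^p = Beta (p+1, 1/th) / th and
   int_0^1 (...) = (|f'(m x)|^q + alpha m |f'(E)|^q) / (alpha + 1) conclude. *)

Lemma locally_of_ball (x : R) (P : R -> Prop) :
  (exists d, 0 < d /\ forall y, Rabs (y - x) < d -> P y) -> locally x P.
Proof.
  intros [d [Hd H]]. exists (mkposreal d Hd). intros y Hy. apply H. exact Hy.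
Qed.

Lemma continuous_of_eps_delta (f : R -> R) (x : R) :
  (forall eps, 0 < eps -> exists d, 0 < d /\
     forall y, Rabs (y - x) < d -> Rabs (f y - f x) < eps) ->
  continuous f x.
Proof.
  intros H. apply continuity_pt_filterlim. intros eps Heps.
  destruct (H eps Heps) as [d [Hd Hf]]. exists d. split; auto.
  intros y [_ Hy]. apply Hf. exact Hy.
Qed.

Lemma eps_delta_of_continuous (f : R -> R) (x : R) : continuous f x ->
  forall eps, 0 < eps -> exists d, 0 < d /\
    forall y, Rabs (y - x) < d -> Rabs (f y - f x) < eps.
Proof.
  intros H eps Heps. apply continuity_pt_filterlim in H.
  destruct (H eps Heps) as [d [Hd Hf]]. exists d. split; auto.
  intros y Hy. destruct (Req_dec y x) as [->|Hne].
  - unfold Rminus. rewrite Rplus_opp_r, Rabs_R0. exact Heps.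
  - apply Hf. split. split. exact I. auto. exact Hy.
Qed.

Lemma cont_plus (f g : R -> R) x :
  continuous f x -> continuous g x -> continuous (fun y => f y + g y) x.
Proof. intros; apply (continuous_plus f g); auto. Qed.
Lemma cont_minus (f g : R -> R) x :
  continuous f x -> continuous g x -> continuous (fun y => f y - g y) x.
Proof. intros; apply (continuous_minus f g); auto. Qed.
Lemma cont_mult (f g : R -> R) x :
  continuous f x -> continuous g x -> continuous (fun y => f y * g y) x.
Proof. intros; apply (continuous_mult f g); auto. Qed.
Lemma cont_comp (f g : R -> R) x :
  continuous f x -> continuous g (f x) -> continuous (fun y => g (f y)) x.
Proof. intros; apply (continuous_comp f g); auto. Qed.
Lemma cont_const (c : R) x : continuous (fun _ : R => c) x.
Proof. apply continuous_const. Qed.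
Lemma cont_id x : continuous (fun y : R => y) x.
Proof. apply continuous_id. Qed.
Lemma cont_abs (f : R -> R) x : continuous f x -> continuous (fun y => Rabs (f y)) x.
Proof.
  intros H. apply (cont_comp f Rabs); auto. apply continuity_pt_filterlim.
  apply Rcontinuity_abs.
Qed.

Lemma dlim_plus f g x lf lg : derivable_pt_lim f x lf -> derivable_pt_lim g x lg ->
  derivable_pt_lim (fun y => f y + g y) x (lf + lg).
Proof. intros. apply (derivable_pt_lim_plus f g); auto. Qed.
Lemma dlim_minus f g x lf lg : derivable_pt_lim f x lf -> derivable_pt_lim g x lg ->
  derivable_pt_lim (fun y => f y - g y) x (lf - lg).
Proof. intros. apply (derivable_pt_lim_minus f g); auto. Qed.
Lemma dlim_mult f g x lf lg : derivable_pt_lim f x lf -> derivable_pt_lim g x lg ->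
  derivable_pt_lim (fun y => f y * g y) x (lf * g x + f x * lg).
Proof. intros. apply (derivable_pt_lim_mult f g); auto. Qed.
Lemma dlim_comp f g x lf lg : derivable_pt_lim f x lf -> derivable_pt_lim g (f x) lg ->
  derivable_pt_lim (fun y => g (f y)) x (lg * lf).
Proof. intros. apply (derivable_pt_lim_comp f g); auto. Qed.
Lemma dlim_const c x : derivable_pt_lim (fun _ => c) x 0.
Proof. apply (derivable_pt_lim_const c). Qed.
Lemma dlim_id x : derivable_pt_lim (fun y => y) x 1.
Proof. apply derivable_pt_lim_id. Qed.
Lemma dlim_ext f g x l : (forall y, f y = g y) ->
  derivable_pt_lim f x l -> derivable_pt_lim g x l.
Proof. intros H1 H2. replace g with f; auto. apply functional_extensionality. auto. Qed.
Lemma dlim_value f x l l' : l = l' -> derivable_pt_lim f x l -> derivable_pt_lim f x l'.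
Proof. intros ->; auto. Qed.

Lemma continuous_of_dlim (f : R -> R) x l : derivable_pt_lim f x l -> continuous f x.
Proof.
  intros H. apply (ex_derive_continuous (K:=R_AbsRing) (V:=R_NormedModule)).
  exists l. apply is_derive_Reals. auto.
Qed.

Lemma exp_le_exp x y : x <= y -> exp x <= exp y.
Proof. intros [H|H]. left; apply exp_increasing; auto. subst; lra. Qed.

Lemma ln_le_sub1 x : 0 < x -> ln x <= x - 1.
Proof. intros H. assert (K := exp_ineq1_le (ln x)). rewrite exp_ln in K; lra. Qed.

Lemma cont_exp (f : R -> R) x : continuous f x -> continuous (fun y => exp (f y)) x.
Proof.
  intros H. apply (cont_comp f exp); auto.
  eapply continuous_of_dlim. apply derivable_pt_lim_exp.
Qed.

Lemma dlim_exp_opp x : derivable_pt_lim (fun t => exp (- t)) x (- exp (- x)).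
Proof.
  apply (dlim_value _ _ (exp (-x) * (0 - 1))). ring.
  apply (dlim_comp (fun t => - t) exp); [|apply derivable_pt_lim_exp].
  apply (dlim_ext (fun y => 0 - y)). intros; ring.
  apply (dlim_minus (fun _ => 0) (fun t => t)). apply dlim_const. apply dlim_id.
Qed.

Lemma rpow_pos x y : 0 < x -> rpow x y = Rpower x y.
Proof. intros H. unfold rpow. destruct (Rlt_dec 0 x); [reflexivity|lra]. Qed.

Lemma rpow_nonpos x y : x <= 0 -> y <> 0 -> rpow x y = 0.
Proof.
  intros H H'. unfold rpow. destruct (Rlt_dec 0 x); [lra|].
  destruct (Req_EM_T y 0); [contradiction|reflexivity].
Qed.

Lemma rpow_base0 y : y <> 0 -> rpow 0 y = 0.
Proof. intros; apply rpow_nonpos; lra. Qed.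

Lemma rpow_exp0 x : rpow x 0 = 1.
Proof.
  unfold rpow. destruct (Rlt_dec 0 x). apply Rpower_O; auto.
  destruct (Req_EM_T 0 0); [reflexivity|lra].
Qed.

Lemma rpow_base1 e : rpow 1 e = 1.
Proof. rewrite rpow_pos by lra. unfold Rpower. rewrite ln_1, Rmult_0_r, exp_0. auto. Qed.

Lemma rpow_ge0 x y : 0 <= rpow x y.
Proof.
  unfold rpow. destruct (Rlt_dec 0 x). unfold Rpower. left; apply exp_pos.
  destruct (Req_EM_T y 0); lra.
Qed.

Lemma rpow_gt0 x y : 0 < x -> 0 < rpow x y.
Proof. intros H. rewrite rpow_pos by auto. unfold Rpower. apply exp_pos. Qed.

Lemma rpow_exp1 x : 0 <= x -> rpow x 1 = x.
Proof.
  intros H. destruct (Rle_lt_or_eq_dec 0 x H).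
  - rewrite rpow_pos by auto. apply Rpower_1; auto.
  - subst. apply rpow_base0; lra.
Qed.

Lemma rpow_mult_distr x y e : 0 <= x -> 0 <= y -> rpow (x * y) e = rpow x e * rpow y e.
Proof.
  intros Hx Hy. destruct (Req_dec e 0) as [->|He]. { rewrite !rpow_exp0; ring. }
  destruct (Rle_lt_or_eq_dec 0 x Hx) as [Hx'|<-].
  2: { rewrite Rmult_0_l, !rpow_base0; auto; ring. }
  destruct (Rle_lt_or_eq_dec 0 y Hy) as [Hy'|<-].
  2: { rewrite Rmult_0_r, !rpow_base0; auto; ring. }
  rewrite !rpow_pos; auto. rewrite Rpower_mult_distr; auto. apply Rmult_lt_0_compat; auto.
Qed.

Lemma rpow_plus x a b : 0 < x -> rpow x (a + b) = rpow x a * rpow x b.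
Proof. intros H. rewrite !rpow_pos; auto. apply Rpower_plus. Qed.

Lemma rpow_succ z e : 0 < e -> 0 <= z -> rpow z (e + 1) = rpow z e * z.
Proof.
  intros He Hz. destruct (Rle_lt_or_eq_dec 0 z Hz) as [H|<-].
  - rewrite rpow_plus, rpow_exp1 by lra. ring.
  - rewrite Rmult_0_r. apply rpow_base0. lra.
Qed.

Lemma rpow_rpow x a b : 0 <= x -> a <> 0 -> rpow (rpow x a) b = rpow x (a * b).
Proof.
  intros Hx Ha. destruct (Rle_lt_or_eq_dec 0 x Hx) as [Hx'|<-].
  - rewrite (rpow_pos x a), (rpow_pos x (a*b)), rpow_pos; auto. apply Rpower_mult.
    unfold Rpower; apply exp_pos.
  - rewrite (rpow_base0 a); auto. destruct (Req_dec b 0) as [->|Hb].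
    + rewrite Rmult_0_r, !rpow_exp0. auto.
    + rewrite !rpow_base0; auto.
Qed.

Lemma rpow_inv_pow x q : 0 <= x -> q <> 0 -> rpow (rpow x q) (/ q) = x.
Proof. intros Hx Hq. rewrite rpow_rpow; auto. rewrite Rinv_r; auto. apply rpow_exp1; auto. Qed.

Lemma rpow_inv x e : 0 < x -> rpow (/ x) e = / rpow x e.
Proof.
  intros H. rewrite !rpow_pos by (auto; apply Rinv_0_lt_compat; auto).
  unfold Rpower. rewrite ln_Rinv by auto. rewrite <- exp_Ropp. f_equal. ring.
Qed.

Lemma rpow_le_base x y e : 0 <= e -> 0 <= x <= y -> rpow x e <= rpow y e.
Proof.
  intros He [Hx Hxy]. destruct (Req_dec e 0) as [->|He0]. { rewrite !rpow_exp0; lra. }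
  destruct (Rle_lt_or_eq_dec 0 x Hx) as [Hx'|<-].
  - rewrite !rpow_pos; try lra. apply Rle_Rpower_l; lra.
  - rewrite rpow_base0; auto. apply rpow_ge0.
Qed.

Lemma rpow_lt_base x y e : 0 < e -> 0 <= x < y -> rpow x e < rpow y e.
Proof.
  intros He [Hx Hxy]. destruct (Rle_lt_or_eq_dec 0 x Hx) as [Hx'|<-].
  - rewrite !rpow_pos; try lra. apply Rlt_Rpower_l; lra.
  - rewrite rpow_base0 by lra. apply rpow_gt0; lra.
Qed.

Lemma rpow_le1 x e : 0 <= e -> 0 <= x <= 1 -> rpow x e <= 1.
Proof. intros He Hx. rewrite <- (rpow_base1 e). apply rpow_le_base; lra. Qed.

Lemma dlim_rpow x y : 0 < x -> derivable_pt_lim (fun z => rpow z y) x (y * rpow x (y - 1)).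
Proof.
  intros Hx. rewrite (rpow_pos x (y-1)) by auto.
  apply is_derive_Reals. apply (is_derive_ext_loc (fun z => Rpower z y)).
  - apply locally_of_ball. exists x. split; auto. intros z Hz. rewrite rpow_pos; auto.
    apply Rabs_def2 in Hz. lra.
  - apply is_derive_Reals. apply derivable_pt_lim_power. auto.
Qed.

Lemma rpow_cont_pos x y : 0 < x -> continuous (fun z => rpow z y) x.
Proof. intros Hx. eapply continuous_of_dlim. apply dlim_rpow. auto. Qed.

(* Off 0, [rpow _ y] is locally constant on the negative side. *)
Lemma rpow_cont_ne0 x y : x <> 0 -> continuous (fun z => rpow z y) x.
Proof.
  intros H. destruct (Rtotal_order x 0) as [Hx|[Hx|Hx]]; [|lra|apply rpow_cont_pos; auto].
  apply continuous_of_eps_delta. intros eps He. exists (-x). split. lra.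
  intros z Hz. apply Rabs_def2 in Hz.
  unfold rpow. destruct (Rlt_dec 0 z); [lra|]. destruct (Rlt_dec 0 x); [lra|].
  unfold Rminus. rewrite Rplus_opp_r, Rabs_R0. auto.
Qed.

Lemma rpow_cont x y : 0 <= y -> continuous (fun z => rpow z y) x.
Proof.
  intros Hy. destruct (Req_dec y 0) as [->|Hy0].
  { apply (continuous_ext (fun _ => 1)). intros; rewrite rpow_exp0; auto. apply continuous_const. }
  destruct (Req_dec x 0) as [->|Hx]; [|apply rpow_cont_ne0; auto].
  apply continuous_of_eps_delta. intros eps He. exists (Rpower eps (/ y)). split.
  { unfold Rpower; apply exp_pos. }
  intros z Hz. rewrite rpow_base0 by lra. rewrite Rminus_0_r in *.
  rewrite Rabs_right by (apply Rle_ge, rpow_ge0).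
  destruct (Rle_lt_dec z 0). { rewrite rpow_nonpos; lra. }
  rewrite Rabs_right in Hz by lra. rewrite rpow_pos by lra.
  replace eps with (Rpower (Rpower eps (/y)) y).
  - apply Rlt_Rpower_l; lra.
  - rewrite Rpower_mult, Rinv_l by lra. apply Rpower_1; auto.
Qed.

Lemma cont_bound (f : R -> R) a b : a <= b -> (forall z, a <= z <= b -> continuous f z) ->
  exists M, 0 <= M /\ forall z, a <= z <= b -> Rabs (f z) <= M.
Proof.
  intros Hab Hc.
  destruct (continuity_ab_maj (fun z => Rabs (f z)) a b Hab) as [Mx [H1 H2]].
  - intros c Hc'. apply continuity_pt_filterlim. apply cont_abs. auto.
  - exists (Rabs (f Mx)). split. apply Rabs_pos. auto.
Qed.

Lemma ex_RInt_cont (f : R -> R) a b : a <= b ->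
  (forall z, a <= z <= b -> continuous f z) -> ex_RInt f a b.
Proof.
  intros Hab H. apply (ex_RInt_continuous (V:=R_CompleteNormedModule)). intros z Hz.
  rewrite Rmin_left, Rmax_right in Hz by lra. auto.
Qed.

Lemma ex_RInt_cont_all (g : R -> R) a b : (forall z, continuous g z) -> ex_RInt g a b.
Proof. intros H. apply (ex_RInt_continuous (V:=R_CompleteNormedModule)). intros; auto. Qed.

Lemma RInt_ge0 (g : R -> R) a b : a <= b -> ex_RInt g a b ->
  (forall z, a < z < b -> 0 <= g z) -> 0 <= RInt g a b.
Proof.
  intros Hab He H.
  assert (H0 : RInt (fun _ => 0) a b = 0).
  { rewrite RInt_const. unfold scal; simpl; unfold mult; simpl; ring. }
  rewrite <- H0. apply RInt_le; auto. apply ex_RInt_const.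
Qed.

Lemma RInt_const_R (c a b : R) : RInt (fun _ => c) a b = (b - a) * c.
Proof. rewrite RInt_const. reflexivity. Qed.

Lemma Chasles_cont (g : R -> R) a b c : (forall z, continuous g z) ->
  RInt g a b + RInt g b c = RInt g a c.
Proof.
  intros H. rewrite <- (RInt_Chasles g a b c). reflexivity.
  apply ex_RInt_cont_all; auto. apply ex_RInt_cont_all; auto.
Qed.

Lemma RInt_lin (f g : R -> R) a b c d : ex_RInt f a b -> ex_RInt g a b ->
  RInt (fun u => c * f u + d * g u) a b = c * RInt f a b + d * RInt g a b.
Proof.
  intros Hf Hg. apply (is_RInt_unique (V:=R_CompleteNormedModule)).
  apply (is_RInt_ext (V:=R_CompleteNormedModule) (fun u => plus (scal c (f u)) (scal d (g u)))).
  { intros; reflexivity. }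
  apply (is_RInt_plus (V:=R_CompleteNormedModule));
    apply (is_RInt_scal (V:=R_CompleteNormedModule));
    apply (RInt_correct (V:=R_CompleteNormedModule)); auto.
Qed.

Lemma dlim_RInt_loc (g : R -> R) l r a y : l < a < r -> l < y < r ->
  (forall z, l < z < r -> continuous g z) ->
  derivable_pt_lim (fun b => RInt g a b) y (g y).
Proof.
  intros Ha Hy H. apply is_derive_Reals.
  apply (is_derive_RInt g (RInt g a) a y); [|apply H; lra].
  apply locally_of_ball. exists (Rmin (y - l) (r - y)). split. apply Rmin_pos; lra.
  intros z Hz. apply (RInt_correct (V:=R_CompleteNormedModule)).
  assert (Hm1 := Rmin_l (y - l) (r - y)). assert (Hm2 := Rmin_r (y - l) (r - y)).
  apply Rabs_def2 in Hz.
  apply (ex_RInt_continuous (V:=R_CompleteNormedModule)). intros w [Hw1 Hw2].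
  apply H. split.
  - eapply Rlt_le_trans; [|apply Hw1]. apply Rmin_glb_lt; lra.
  - eapply Rle_lt_trans; [apply Hw2|]. apply Rmax_lub_lt; lra.
Qed.

Lemma dlim_RInt (g : R -> R) a y : (forall z, continuous g z) ->
  derivable_pt_lim (fun b => RInt g a b) y (g y).
Proof.
  intros H. apply (dlim_RInt_loc g (Rmin a y - 1) (Rmax a y + 1)); auto.
  - assert (H1 := Rmin_l a y). assert (H2 := Rmax_l a y). lra.
  - assert (H1 := Rmin_r a y). assert (H2 := Rmax_r a y). lra.
Qed.

Lemma RiemannInt_primitive (F f : R -> R) c d (pr : Riemann_integrable f c d) : c <= d ->
  (forall z, c <= z <= d -> derivable_pt_lim F z (f z) /\ continuous f z) ->
  RiemannInt pr = F d - F c.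
Proof.
  intros Hcd H. rewrite <- RInt_Reals.
  assert (H' := is_RInt_derive F f c d). apply is_RInt_unique in H'. exact H'.
  - intros x Hx. rewrite Rmin_left, Rmax_right in Hx by lra. apply is_derive_Reals. apply H; lra.
  - intros x Hx. rewrite Rmin_left, Rmax_right in Hx by lra. apply H; lra.
Qed.

Lemma Rabs_sub_le x y : Rabs (x - y) <= Rabs x + Rabs y.
Proof. unfold Rminus. eapply Rle_trans. apply Rabs_triang. rewrite Rabs_Ropp. lra. Qed.

Lemma improper_int_of_primitive (F f : R -> R) a b : a < b ->
  continuous F a -> continuous F b ->
  (forall z, a < z < b -> derivable_pt_lim F z (f z) /\ continuous f z) ->
  improper_int f a b (F b - F a).
Proof.
  intros Hab HFa HFb H. split.
  - intros c d Hc Hcd Hd. constructor. apply ex_RInt_Reals_0. apply ex_RInt_cont; auto.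
    intros; apply H; lra.
  - intros eps Heps.
    destruct (eps_delta_of_continuous F a HFa (eps/2)) as [d1 [Hd1 H1]]; try lra.
    destruct (eps_delta_of_continuous F b HFb (eps/2)) as [d2 [Hd2 H2]]; try lra.
    exists (Rmin (Rmin d1 d2) ((b-a)/2)). split. { repeat apply Rmin_pos; lra. }
    intros c d pr Hc Hd.
    assert (Hm1 := Rmin_l (Rmin d1 d2) ((b-a)/2)). assert (Hm2 := Rmin_r (Rmin d1 d2) ((b-a)/2)).
    assert (Hm3 := Rmin_l d1 d2). assert (Hm4 := Rmin_r d1 d2).
    rewrite (RiemannInt_primitive F f c d pr) by (try lra; intros; apply H; lra).
    assert (Rabs (F c - F a) < eps/2) by (apply H1; rewrite Rabs_right; lra).
    assert (Rabs (F d - F b) < eps/2) by (apply H2; rewrite Rabs_left; lra).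
    replace (F d - F c - (F b - F a)) with ((F d - F b) - (F c - F a)) by ring.
    eapply Rle_lt_trans. apply Rabs_sub_le. lra.
Qed.

Lemma improper_int_unique f a b l1 l2 : a < b ->
  improper_int f a b l1 -> improper_int f a b l2 -> l1 = l2.
Proof.
  intros Hab [Hi H1] [_ H2]. apply Rminus_diag_uniq. apply Rabs_eq_0.
  apply Rle_antisym; [|apply Rabs_pos]. apply Rnot_lt_le. intros Hp.
  set (e := Rabs (l1 - l2)) in *.
  destruct (H1 (e/2)) as [d1 [Hd1 K1]]; try lra.
  destruct (H2 (e/2)) as [d2 [Hd2 K2]]; try lra.
  set (d := Rmin (Rmin d1 d2) ((b-a)/2)).
  assert (Hd : 0 < d) by (unfold d; repeat apply Rmin_pos; lra).
  assert (Hm1 := Rmin_l (Rmin d1 d2) ((b-a)/2)). assert (Hm2 := Rmin_r (Rmin d1 d2) ((b-a)/2)).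
  assert (Hm3 := Rmin_l d1 d2). assert (Hm4 := Rmin_r d1 d2). fold d in Hm1, Hm2.
  destruct (Hi (a + d/2) (b - d/2)) as [pr]; try lra.
  assert (Rabs (RiemannInt pr - l1) < e/2) by (apply K1; lra).
  assert (Rabs (RiemannInt pr - l2) < e/2) by (apply K2; lra).
  assert (e <= Rabs (RiemannInt pr - l2) + Rabs (RiemannInt pr - l1)).
  { unfold e. replace (l1 - l2) with ((RiemannInt pr - l2) - (RiemannInt pr - l1)) by ring.
    apply Rabs_sub_le. }
  lra.
Qed.

Lemma ImpInt_val f a b l : a < b -> improper_int f a b l -> ImpInt f a b = l.
Proof.
  intros Hab H. unfold ImpInt.
  assert (Hs := epsilon_spec (inhabits 0) (fun l => improper_int f a b l) (ex_intro _ l H)).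
  eapply improper_int_unique; eauto.
Qed.

(* A function continuous on [a, b] has its proper integral as improper integral:
   the two end pieces of [a, b] \ [c, d] contribute at most M (c - a + b - d). *)
Lemma improper_int_RInt f a b : a < b -> (forall z, a <= z <= b -> continuous f z) ->
  improper_int f a b (RInt f a b).
Proof.
  intros Hab Hf.
  assert (Hi : forall u v, a <= u -> u <= v -> v <= b -> ex_RInt f u v).
  { intros u v ? ? ?. apply ex_RInt_cont; auto. intros; apply Hf; lra. }
  split.
  - intros c d Hc Hcd Hd. constructor. apply ex_RInt_Reals_0. apply Hi; lra.
  - intros eps Heps. destruct (cont_bound f a b) as [M [HM0 HM]]; try lra; auto.
    exists (Rmin ((b - a) / 2) (eps / (2 * (M + 1)))). split.
    { apply Rmin_pos; apply Rdiv_lt_0_compat; lra. }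
    intros c d pr Hc Hd.
    assert (Hm1 := Rmin_l ((b - a) / 2) (eps / (2 * (M + 1)))).
    assert (Hm2 := Rmin_r ((b - a) / 2) (eps / (2 * (M + 1)))).
    rewrite <- RInt_Reals.
    rewrite <- (RInt_Chasles f a c b), <- (RInt_Chasles f c d b) by (apply Hi; lra).
    assert (HA : Rabs (RInt f a c) <= (c - a) * M).
    { apply abs_RInt_le_const; try lra. apply Hi; lra. intros; apply HM; lra. }
    assert (HB : Rabs (RInt f d b) <= (b - d) * M).
    { apply abs_RInt_le_const; try lra. apply Hi; lra. intros; apply HM; lra. }
    assert (Hsmall : (c - a + (b - d)) * M < eps).
    { apply Rle_lt_trans with ((c - a + (b - d)) * (M + 1)). nra.
      apply Rlt_le_trans with (2 * (eps / (2 * (M + 1))) * (M + 1)).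
      apply Rmult_lt_compat_r; lra. right. field. lra. }
    change plus with Rplus.
    replace (RInt f c d - (RInt f a c + (RInt f c d + RInt f d b)))
      with (- (RInt f a c + RInt f d b)) by ring.
    rewrite Rabs_Ropp. eapply Rle_lt_trans. apply Rabs_triang. nra.
Qed.

Lemma FTC_open (F f : R -> R) a b : a < b ->
  (forall z, a <= z <= b -> continuous f z) ->
  continuous F a -> continuous F b ->
  (forall z, a < z < b -> derivable_pt_lim F z (f z)) ->
  RInt f a b = F b - F a.
Proof.
  intros Hab Hf HFa HFb HF. apply (improper_int_unique f a b); auto.
  - apply improper_int_RInt; auto.
  - apply improper_int_of_primitive; auto. intros z Hz. split; auto. apply Hf; lra.
Qed.

Lemma improper_int_0inf_of_primitive (F f : R -> R) L :
  continuous F 0 ->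
  (forall eps, 0 < eps -> exists M, forall d, M < d -> Rabs (F d - L) < eps) ->
  (forall z, 0 < z -> derivable_pt_lim F z (f z) /\ continuous f z) ->
  improper_int_0inf f (L - F 0).
Proof.
  intros HF0 HL H. split.
  - intros c d Hc Hcd. constructor. apply ex_RInt_Reals_0. apply ex_RInt_cont; auto.
    intros; apply H; lra.
  - intros eps Heps.
    destruct (eps_delta_of_continuous F 0 HF0 (eps/2)) as [d1 [Hd1 H1]]; try lra.
    destruct (HL (eps/2)) as [M HM]; try lra.
    exists d1. split; auto. exists (Rmax M d1). intros c d pr Hc Hd.
    assert (Hm1 := Rmax_l M d1). assert (Hm2 := Rmax_r M d1).
    rewrite (RiemannInt_primitive F f c d pr) by (try lra; intros; apply H; lra).
    assert (Rabs (F c - F 0) < eps/2) by (apply H1; rewrite Rabs_right; lra).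
    assert (Rabs (F d - L) < eps/2) by (apply HM; lra).
    replace (F d - F c - (L - F 0)) with ((F d - L) - (F c - F 0)) by ring.
    eapply Rle_lt_trans. apply Rabs_sub_le. lra.
Qed.

Lemma improper_int_0inf_unique f l1 l2 :
  improper_int_0inf f l1 -> improper_int_0inf f l2 -> l1 = l2.
Proof.
  intros [Hi H1] [_ H2]. apply Rminus_diag_uniq. apply Rabs_eq_0.
  apply Rle_antisym; [|apply Rabs_pos]. apply Rnot_lt_le. intros Hp.
  set (e := Rabs (l1 - l2)) in *.
  destruct (H1 (e/2)) as [d1 [Hd1 [M1 K1]]]; try lra.
  destruct (H2 (e/2)) as [d2 [Hd2 [M2 K2]]]; try lra.
  set (c := Rmin (Rmin d1 d2) 1 / 2). set (D := Rmax (Rmax M1 M2) 1 + 1).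
  assert (Hm1 := Rmin_l (Rmin d1 d2) 1). assert (Hm2 := Rmin_r (Rmin d1 d2) 1).
  assert (Hm3 := Rmin_l d1 d2). assert (Hm4 := Rmin_r d1 d2).
  assert (0 < Rmin (Rmin d1 d2) 1) by (repeat apply Rmin_pos; lra).
  assert (Hx1 := Rmax_l (Rmax M1 M2) 1). assert (Hx2 := Rmax_r (Rmax M1 M2) 1).
  assert (Hx3 := Rmax_l M1 M2). assert (Hx4 := Rmax_r M1 M2).
  destruct (Hi c D) as [pr]; [unfold c; lra | unfold c, D; lra |].
  assert (Rabs (RiemannInt pr - l1) < e/2) by (apply K1; unfold c, D; lra).
  assert (Rabs (RiemannInt pr - l2) < e/2) by (apply K2; unfold c, D; lra).
  assert (e <= Rabs (RiemannInt pr - l2) + Rabs (RiemannInt pr - l1)).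
  { unfold e. replace (l1 - l2) with ((RiemannInt pr - l2) - (RiemannInt pr - l1)) by ring.
    apply Rabs_sub_le. }
  lra.
Qed.

Lemma ImpInt_0inf_val f l : improper_int_0inf f l -> ImpInt_0inf f = l.
Proof.
  intros H. unfold ImpInt_0inf.
  assert (Hs := epsilon_spec (inhabits 0) (fun l => improper_int_0inf f l) (ex_intro _ l H)).
  eapply improper_int_0inf_unique; eauto.
Qed.

Lemma monotone_limit (F : R -> R) B :
  (forall y z, 1 <= y <= z -> F y <= F z) -> (forall y, 1 <= y -> F y <= B) ->
  exists L, (forall y, 1 <= y -> F y <= L) /\
    forall eps, 0 < eps -> exists M, forall d, M < d -> Rabs (F d - L) < eps.
Proof.
  intros Hm Hb. set (E := fun r => exists y, 1 <= y /\ r = F y).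
  destruct (completeness E) as [L [HL1 HL2]].
  - exists B. intros r [y [Hy ->]]. auto.
  - exists (F 1). exists 1. split; lra.
  - exists L. split. { intros y Hy. apply HL1. exists y; auto. }
    intros eps Heps.
    destruct (Classical_Prop.classic (exists y, 1 <= y /\ L - eps < F y)) as [[y0 [Hy0 Hy0']]|Hn].
    + exists y0. intros d Hd. assert (F y0 <= F d) by (apply Hm; lra).
      assert (F d <= L) by (apply HL1; exists d; split; auto; lra).
      rewrite Rabs_left1 by lra. lra.
    + exfalso. assert (L <= L - eps). 2: lra.
      apply HL2. intros r [y [Hy ->]].
      apply Rnot_lt_le. intro. apply Hn. exists y; auto.
Qed.

(* t^c e^(-t) is bounded on (0, +oo), by its value exp (c (ln c - 1)) at t = c. *)
Lemma pow_exp_bound c t : 0 < c -> 0 < t -> rpow t c * exp (- t) <= exp (c * (ln c - 1)).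
Proof.
  intros Hc Ht. rewrite rpow_pos by auto. unfold Rpower. rewrite <- exp_plus.
  apply exp_le_exp. assert (H := ln_le_sub1 (t / c)). rewrite ln_div in H by auto.
  assert (0 < t / c) by (apply Rdiv_lt_0_compat; auto).
  specialize (H H0). apply Rmult_le_compat_l with (r := c) in H; [|lra].
  replace (c * (t / c - 1)) with (t - c) in H by (field; lra). nra.
Qed.

(* The recursion Gamma (th + 1) = th Gamma th, and Gamma th > 0: both integrals
   are computed from the limit L of the partial integrals G y of t^th e^(-t),
   the primitive of t^(th-1) e^(-t) being (t^th e^(-t) + G t) / th. *)
Section GammaRecursion.
Variable th : R.
Hypothesis Hth : 0 < th.

Definition gamma_integrand (t : R) : R := rpow t th * exp (- t).
Definition gamma_partial (y : R) : R := RInt gamma_integrand 0 y.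
Definition gamma_tail_const : R := exp ((th + 2) * (ln (th + 2) - 1)).

Lemma gamma_integrand_cont z : continuous gamma_integrand z.
Proof.
  unfold gamma_integrand. apply cont_mult. apply rpow_cont; lra.
  apply cont_exp. apply (continuous_opp (fun t : R => t)), cont_id.
Qed.

Lemma gamma_integrand_ge0 z : 0 <= gamma_integrand z.
Proof. unfold gamma_integrand. apply Rmult_le_pos. apply rpow_ge0. left; apply exp_pos. Qed.

(* Tail bound t^th e^(-t) <= K / t^2, from pow_exp_bound with exponent th + 2. *)
Lemma gamma_integrand_tail t : 0 < t -> gamma_integrand t <= gamma_tail_const / (t * t).
Proof.
  intros Ht. unfold gamma_integrand.
  assert (H := pow_exp_bound (th + 2) t ltac:(lra) Ht).
  rewrite rpow_plus in H by auto.
  replace (rpow t 2) with (t * t) in H.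
  - apply Rmult_le_reg_r with (t * t). nra.
    replace (gamma_tail_const / (t * t) * (t * t)) with gamma_tail_const by (field; lra).
    unfold gamma_tail_const. eapply Rle_trans; [|exact H]; right; ring.
  - rewrite rpow_pos by auto. replace 2 with (INR 2) by (simpl; ring).
    rewrite Rpower_pow by auto. simpl; ring.
Qed.

(* The partial integrals are nondecreasing and bounded, since int_1^oo K / t^2 = K. *)
Lemma gamma_partial_mono y z : 0 <= y <= z -> gamma_partial y <= gamma_partial z.
Proof.
  intros H. unfold gamma_partial. rewrite <- (Chasles_cont _ 0 y z) by apply gamma_integrand_cont.
  assert (0 <= RInt gamma_integrand y z); [|lra].
  apply RInt_ge0. lra. apply ex_RInt_cont_all, gamma_integrand_cont.
  intros; apply gamma_integrand_ge0.
Qed.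

Lemma gamma_partial_bound y : 1 <= y -> gamma_partial y <= gamma_partial 1 + gamma_tail_const.
Proof.
  intros Hy. unfold gamma_partial. rewrite <- (Chasles_cont _ 0 1 y) by apply gamma_integrand_cont.
  apply Rplus_le_compat_l. set (K := gamma_tail_const).
  assert (HK : 0 < K) by apply exp_pos.
  assert (Hc : forall z, 1 <= z <= y -> continuous (fun t => K / (t * t)) z).
  { intros z Hz. apply (ex_derive_continuous (K:=R_AbsRing) (V:=R_NormedModule)).
    auto_derive. nra. }
  assert (E : RInt (fun t => K / (t * t)) 1 y = K - K / y).
  { assert (H := is_RInt_derive (fun t => - K / t) (fun t => K / (t * t)) 1 y).
    apply is_RInt_unique in H. rewrite H. unfold minus, plus, opp; simpl. field. lra.
    - intros x Hx. rewrite Rmin_left, Rmax_right in Hx by lra. auto_derive. lra. field. lra.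
    - intros x Hx. rewrite Rmin_left, Rmax_right in Hx by lra. apply Hc; lra. }
  apply Rle_trans with (RInt (fun t => K / (t * t)) 1 y).
  - apply RInt_le; auto. apply ex_RInt_cont_all, gamma_integrand_cont.
    apply ex_RInt_cont; auto.
    intros x Hx. apply gamma_integrand_tail. lra.
  - rewrite E. assert (0 < K / y) by (apply Rdiv_lt_0_compat; lra). lra.
Qed.

(* The integrand is at least 2^(-th) e^(-1) on [1/2, 1]. *)
Lemma gamma_partial_1_pos : 0 < gamma_partial 1.
Proof.
  unfold gamma_partial. rewrite <- (Chasles_cont _ 0 (1/2) 1) by apply gamma_integrand_cont.
  assert (0 <= RInt gamma_integrand 0 (1/2)).
  { apply RInt_ge0. lra. apply ex_RInt_cont_all, gamma_integrand_cont.
    intros; apply gamma_integrand_ge0. }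
  set (c0 := rpow (1/2) th * exp (-1)).
  assert (0 < c0) by (apply Rmult_lt_0_compat; [apply rpow_gt0; lra|apply exp_pos]).
  assert (RInt (fun _ => c0) (1/2) 1 <= RInt gamma_integrand (1/2) 1).
  { apply RInt_le. lra. apply ex_RInt_const. apply ex_RInt_cont_all, gamma_integrand_cont.
    intros x Hx. unfold gamma_integrand, c0. apply Rmult_le_compat.
    apply rpow_ge0. left; apply exp_pos. apply rpow_le_base; lra. apply exp_le_exp; lra. }
  rewrite RInt_const_R in H1. nra.
Qed.

Lemma gamma_partial_limit : exists L, 0 < L /\
  forall eps, 0 < eps -> exists M, forall d, M < d -> Rabs (gamma_partial d - L) < eps.
Proof.
  destruct (monotone_limit gamma_partial (gamma_partial 1 + gamma_tail_const)) as [L [HL1 HL2]].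
  - intros y z H. apply gamma_partial_mono. lra.
  - apply gamma_partial_bound.
  - exists L. split; auto. assert (H := HL1 1 ltac:(lra)).
    assert (H' := gamma_partial_1_pos). lra.
Qed.

Lemma gamma_partial_0 : gamma_partial 0 = 0.
Proof. unfold gamma_partial. rewrite RInt_point. reflexivity. Qed.

Lemma dlim_gamma_partial z : derivable_pt_lim gamma_partial z (gamma_integrand z).
Proof. apply dlim_RInt. apply gamma_integrand_cont. Qed.

(* t^th e^(-t) tends to 0 at +oo, being at most K / t^2. *)
Lemma gamma_integrand_vanishes eps : 0 < eps ->
  exists M, forall d, M < d -> gamma_integrand d < eps.
Proof.
  intros Heps. set (K := gamma_tail_const). assert (HK : 0 < K) by apply exp_pos.
  exists (Rmax 1 (K / eps)). intros d Hd.
  assert (H1 := Rmax_l 1 (K / eps)). assert (H2 := Rmax_r 1 (K / eps)).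
  assert (Hb := gamma_integrand_tail d ltac:(lra)). fold K in Hb.
  assert (K / (d * d) <= K / d).
  { unfold Rdiv. apply Rmult_le_compat_l. lra. apply Rinv_le_contravar; nra. }
  assert (K / d < eps); [|lra].
  apply Rmult_lt_reg_r with d. lra. unfold Rdiv. rewrite Rmult_assoc, Rinv_l by lra.
  assert (H6 : K / eps < d) by lra. apply Rmult_lt_compat_l with (r := eps) in H6; auto.
  replace (eps * (K / eps)) with K in H6 by (field; lra). lra.
Qed.

Section Limit.
Variable L : R.
Hypothesis HLim : forall eps, 0 < eps ->
  exists M, forall d, M < d -> Rabs (gamma_partial d - L) < eps.

Lemma Gamma_succ_limit : Gamma (th + 1) = L.
Proof.
  unfold Gamma. replace (th + 1 - 1) with th by ring.
  replace L with (L - gamma_partial 0) by (rewrite gamma_partial_0; ring).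
  apply ImpInt_0inf_val. apply improper_int_0inf_of_primitive; auto.
  - eapply continuous_of_dlim. apply dlim_gamma_partial.
  - intros z Hz. split. apply dlim_gamma_partial. apply gamma_integrand_cont.
Qed.

(* Integration by parts: (t^th e^(-t) + G t) / th is a primitive of t^(th-1) e^(-t). *)
Lemma Gamma_limit : Gamma th = L / th.
Proof.
  set (F := fun y => (gamma_integrand y + gamma_partial y) * / th).
  unfold Gamma. replace (L / th) with (L * / th - F 0).
  2: { unfold F, gamma_integrand. rewrite gamma_partial_0, rpow_base0 by lra. field. lra. }
  apply ImpInt_0inf_val. apply improper_int_0inf_of_primitive.
  - unfold F. apply cont_mult; [|apply cont_const]. apply cont_plus. apply gamma_integrand_cont.
    eapply continuous_of_dlim. apply dlim_gamma_partial.
  - intros eps Heps.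
    destruct (HLim (th * eps / 2)) as [M1 HM1]. { apply Rdiv_lt_0_compat; [apply Rmult_lt_0_compat|]; lra. }
    destruct (gamma_integrand_vanishes (th * eps / 2)) as [M2 HM2].
    { apply Rdiv_lt_0_compat; [apply Rmult_lt_0_compat|]; lra. }
    exists (Rmax M1 M2). intros d Hd.
    assert (HA := HM1 d ltac:(assert (H := Rmax_l M1 M2); lra)).
    assert (HB := HM2 d ltac:(assert (H := Rmax_r M1 M2); lra)).
    assert (Hg0 := gamma_integrand_ge0 d).
    unfold F. replace ((gamma_integrand d + gamma_partial d) * / th - L * / th)
      with ((gamma_integrand d + (gamma_partial d - L)) * / th) by ring.
    rewrite Rabs_mult, (Rabs_right (/ th)) by (apply Rle_ge; left; apply Rinv_0_lt_compat; lra).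
    apply Rmult_lt_reg_r with th. lra. rewrite Rmult_assoc, Rinv_l, Rmult_1_r by lra.
    eapply Rle_lt_trans. apply Rabs_triang.
    rewrite (Rabs_right (gamma_integrand d)) by lra. lra.
  - intros z Hz. split.
    + unfold F, gamma_integrand.
      apply (dlim_value _ _ ((th * rpow z (th - 1) * exp (- z) + rpow z th * (- exp (- z))
                              + gamma_integrand z) * / th
                             + (rpow z th * exp (- z) + gamma_partial z) * 0)).
      { unfold gamma_integrand. field. lra. }
      apply (dlim_mult (fun y => rpow y th * exp (- y) + gamma_partial y) (fun _ => / th));
        [|apply dlim_const].
      apply (dlim_plus (fun y => rpow y th * exp (- y)) gamma_partial); [|apply dlim_gamma_partial].
      apply (dlim_mult (fun y => rpow y th) (fun y => exp (- y))).
      apply dlim_rpow; auto. apply dlim_exp_opp.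
    + apply cont_mult. apply rpow_cont_pos; auto.
      apply cont_exp. apply (continuous_opp (fun t : R => t)), cont_id.
Qed.

End Limit.

Lemma Gamma_recursion : 0 < Gamma th /\ Gamma (th + 1) = th * Gamma th.
Proof.
  destruct gamma_partial_limit as [L [HL HLim]].
  rewrite (Gamma_succ_limit L HLim), (Gamma_limit L HLim). split.
  - apply Rdiv_lt_0_compat; lra.
  - field. lra.
Qed.

End GammaRecursion.

(* The kernel (1 - u^th)^p, whose integral over [0, 1] is Beta (p + 1) (1/th) / th. *)
Definition beta_kernel (th p u : R) : R := rpow (1 - rpow u th) p.

Lemma beta_kernel_cont th p z : 0 < th -> 0 < p -> continuous (beta_kernel th p) z.
Proof.
  intros. unfold beta_kernel. apply (cont_comp (fun u => 1 - rpow u th) (fun v => rpow v p)).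
  apply cont_minus. apply cont_const. apply rpow_cont; lra. apply rpow_cont; lra.
Qed.

(* The kernel is bounded below by a positive constant on [0, 1/2]. *)
Lemma beta_kernel_integral_pos th p : 0 < th -> 0 < p -> 0 < RInt (beta_kernel th p) 0 1.
Proof.
  intros Hth Hp. assert (Hkc : forall z, continuous (beta_kernel th p) z) by (intros; apply beta_kernel_cont; lra).
  rewrite <- (Chasles_cont (beta_kernel th p) 0 (1/2) 1) by auto.
  assert (0 <= RInt (beta_kernel th p) (1/2) 1).
  { apply RInt_ge0. lra. apply ex_RInt_cont_all; auto. intros; apply rpow_ge0. }
  set (c0 := rpow (1 - rpow (1/2) th) p).
  assert (Hh : rpow (1/2) th < 1).
  { assert (Hlt := rpow_lt_base (1/2) 1 th ltac:(lra) ltac:(lra)). rewrite rpow_base1 in Hlt. exact Hlt. }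
  assert (0 < c0) by (apply rpow_gt0; lra).
  assert (RInt (fun _ => c0) 0 (1/2) <= RInt (beta_kernel th p) 0 (1/2)).
  { apply RInt_le. lra. apply ex_RInt_const. apply ex_RInt_cont_all; auto.
    intros x Hx. unfold beta_kernel, c0. apply rpow_le_base. lra. split.
    - assert (rpow (1/2) th <= 1) by lra. lra.
    - assert (rpow x th <= rpow (1/2) th) by (apply rpow_le_base; lra). lra. }
  rewrite RInt_const_R in H1. nra.
Qed.

(* Substituting t = 1 - u^th in the Beta integral: the primitive of
   t^p (1-t)^(1/th - 1) on (0, 1) is - th * int_1^((1-t)^(1/th)) (1 - u^th)^p du. *)
Lemma Beta_kernel_integral th p : 0 < th -> 0 < p ->
  Beta (p + 1) (/ th) = th * RInt (beta_kernel th p) 0 1.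
Proof.
  intros Hth Hp. unfold Beta. replace (p + 1 - 1) with p by ring.
  set (w := fun y => rpow (1 - y) (/ th)).
  set (F := fun y => - th * RInt (beta_kernel th p) 1 (w y)).
  assert (Hk : forall z, continuous (beta_kernel th p) z) by (intros; apply beta_kernel_cont; auto).
  assert (Hw0 : w 0 = 1). { unfold w. rewrite Rminus_0_r. apply rpow_base1. }
  assert (Hw1 : w 1 = 0).
  { unfold w. rewrite Rminus_diag. apply rpow_base0. apply Rinv_neq_0_compat; lra. }
  assert (E : th * RInt (beta_kernel th p) 0 1 = F 1 - F 0).
  { unfold F. rewrite Hw0, Hw1, RInt_point. rewrite <- (opp_RInt_swap (beta_kernel th p) 0 1).
    unfold opp, zero; simpl. ring. apply ex_RInt_cont_all; auto. }
  rewrite E. apply ImpInt_val. lra.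
  assert (Hwc : forall z, continuous w z).
  { intros z. unfold w. apply (cont_comp (fun y => 1 - y) (fun v => rpow v (/ th))).
    apply cont_minus. apply cont_const. apply cont_id.
    apply rpow_cont. left; apply Rinv_0_lt_compat; auto. }
  assert (HFc : forall z, continuous F z).
  { intros z. unfold F. apply cont_mult. apply cont_const.
    apply (cont_comp w (fun v => RInt (beta_kernel th p) 1 v)). auto.
    eapply continuous_of_dlim. apply dlim_RInt. auto. }
  apply improper_int_of_primitive; auto. lra.
  intros z Hz. split.
  - unfold F.
    apply (dlim_value _ _ (0 * RInt (beta_kernel th p) 1 (w z)
       + - th * (beta_kernel th p (w z) * ((/ th * rpow (1 - z) (/ th - 1)) * (0 - 1))))).
    { unfold beta_kernel, w. rewrite rpow_rpow by (try lra; apply Rinv_neq_0_compat; lra).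
      rewrite Rinv_l, rpow_exp1 by lra. replace (1 - (1 - z)) with z by ring. field. lra. }
    apply (dlim_mult (fun _ => - th) (fun y => RInt (beta_kernel th p) 1 (w y))). apply dlim_const.
    apply (dlim_comp w (fun v => RInt (beta_kernel th p) 1 v)); [|apply dlim_RInt; auto].
    unfold w. apply (dlim_comp (fun y => 1 - y) (fun v => rpow v (/ th))).
    + apply (dlim_minus (fun _ => 1) (fun y => y)). apply dlim_const. apply dlim_id.
    + apply dlim_rpow. lra.
  - apply cont_mult. apply rpow_cont_pos; lra.
    apply (cont_comp (fun y => 1 - y) (fun v => rpow v (/ th - 1))).
    apply cont_minus. apply cont_const. apply cont_id. apply rpow_cont_pos; lra.
Qed.

(* Young's inequality x^(1/p) y^(1/q) <= x/p + y/q for conjugate exponents,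
   from the concavity bound ln t <= t - 1. *)
Lemma young x y p q : 0 <= x -> 0 <= y -> 0 < p -> 0 < q -> / p + / q = 1 ->
  rpow x (/ p) * rpow y (/ q) <= x / p + y / q.
Proof.
  intros Hx Hy Hp Hq Hpq.
  assert (Hip : 0 < / p) by (apply Rinv_0_lt_compat; auto).
  assert (Hiq : 0 < / q) by (apply Rinv_0_lt_compat; auto).
  destruct (Rle_lt_or_eq_dec 0 x Hx) as [Hx'|<-].
  2: { rewrite rpow_base0 by lra. rewrite Rmult_0_l. unfold Rdiv.
       apply Rplus_le_le_0_compat; apply Rmult_le_pos; lra. }
  destruct (Rle_lt_or_eq_dec 0 y Hy) as [Hy'|<-].
  2: { rewrite (rpow_base0 (/ q)) by lra. rewrite Rmult_0_r. unfold Rdiv.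
       apply Rplus_le_le_0_compat; apply Rmult_le_pos; lra. }
  set (A := x / p + y / q).
  assert (HA : 0 < A). { unfold A, Rdiv. apply Rplus_lt_0_compat; apply Rmult_lt_0_compat; lra. }
  rewrite !rpow_pos by auto. unfold Rpower. rewrite <- exp_plus.
  rewrite <- (exp_ln A) by auto. apply exp_le_exp.
  assert (H1 := ln_le_sub1 (x / A) ltac:(apply Rdiv_lt_0_compat; auto)).
  assert (H2 := ln_le_sub1 (y / A) ltac:(apply Rdiv_lt_0_compat; auto)).
  rewrite ln_div in H1, H2 by auto.
  assert (/ p * (ln x - ln A) + / q * (ln y - ln A) <= / p * (x / A - 1) + / q * (y / A - 1)).
  { apply Rplus_le_compat; apply Rmult_le_compat_l; lra. }
  replace (/ p * (x / A - 1) + / q * (y / A - 1)) with ((x / p + y / q) / A - (/ p + / q)) in H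
    by (field; lra).
  fold A in H. rewrite Hpq in H. unfold Rdiv in H. rewrite Rinv_r in H by lra.
  replace (/ p * ln x + / q * ln y)
    with (/ p * (ln x - ln A) + / q * (ln y - ln A) + (/p + /q) * ln A) by ring.
  rewrite Hpq. lra.
Qed.

(* Hoelder's inequality on [0, 1] for nonnegative continuous functions with
   nonzero p- and q-norms: integrate Young's inequality applied to the
   normalised values F^p / X and G^q / Y. *)
Lemma holder (F G : R -> R) p q : 1 < q -> p = q / (q - 1) ->
  (forall z, continuous F z) -> (forall z, continuous G z) ->
  (forall u, 0 <= u <= 1 -> 0 <= F u /\ 0 <= G u) ->
  0 < RInt (fun u => rpow (F u) p) 0 1 -> 0 < RInt (fun u => rpow (G u) q) 0 1 ->
  RInt (fun u => F u * G u) 0 1 <=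
    rpow (RInt (fun u => rpow (F u) p) 0 1) (/ p) * rpow (RInt (fun u => rpow (G u) q) 0 1) (/ q).
Proof.
  intros Hq Hp HF HG Hpos HX HY.
  set (X := RInt (fun u => rpow (F u) p) 0 1) in *.
  set (Y := RInt (fun u => rpow (G u) q) 0 1) in *.
  assert (Hp1 : 1 < p).
  { rewrite Hp. apply Rmult_lt_reg_r with (q - 1). lra.
    unfold Rdiv. rewrite Rmult_assoc, Rinv_l by lra. lra. }
  assert (Hpq : / p + / q = 1). { rewrite Hp. field. lra. }
  set (cX := rpow X (/ p)). set (cY := rpow Y (/ q)).
  assert (HcX : 0 < cX) by (apply rpow_gt0; auto). assert (HcY : 0 < cY) by (apply rpow_gt0; auto).
  assert (Hc : forall z, continuous (fun u => rpow (F u) p) z).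
  { intros z. apply (cont_comp F (fun v => rpow v p)). auto. apply rpow_cont; lra. }
  assert (Hc' : forall z, continuous (fun u => rpow (G u) q) z).
  { intros z. apply (cont_comp G (fun v => rpow v q)). auto. apply rpow_cont; lra. }
  apply Rle_trans with (RInt (fun u => (cX * cY / (p * X)) * rpow (F u) p
                                       + (cX * cY / (q * Y)) * rpow (G u) q) 0 1).
  - apply RInt_le. lra. apply ex_RInt_cont_all. intros; apply cont_mult; auto.
    apply ex_RInt_cont_all. intros; apply cont_plus; apply cont_mult; auto; apply cont_const.
    intros u Hu. destruct (Hpos u ltac:(lra)) as [HFu HGu].
    assert (H := young (rpow (F u) p * / X) (rpow (G u) q * / Y) p q).
    rewrite !rpow_mult_distr in H;
      try (try apply rpow_ge0; left; apply Rinv_0_lt_compat; auto).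
    rewrite !rpow_inv_pow, !rpow_inv in H by (auto; lra). fold cX cY in H.
    specialize (H ltac:(apply Rmult_le_pos; [apply rpow_ge0|left; apply Rinv_0_lt_compat; auto])
                   ltac:(apply Rmult_le_pos; [apply rpow_ge0|left; apply Rinv_0_lt_compat; auto])
                   ltac:(lra) ltac:(lra) Hpq).
    apply Rmult_le_compat_l with (r := cX * cY) in H; [|nra].
    replace (cX * cY * (F u * / cX * (G u * / cY))) with (F u * G u) in H by (field; lra).
    eapply Rle_trans. exact H. right. field. lra.
  - rewrite RInt_lin by (apply ex_RInt_cont_all; auto). fold X Y.
    right. replace (cX * cY) with (cX * cY * (/ p + / q)) at 3 by (rewrite Hpq; ring). field. lra.
Qed.

Lemma dlim_lipschitz (phi : R -> R) x l : derivable_pt_lim phi x l ->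
  exists d, 0 < d /\ forall y, Rabs (y - x) < d ->
    Rabs (phi y - phi x) <= (Rabs l + 1) * Rabs (y - x).
Proof.
  intros H. destruct (H 1 ltac:(lra)) as [d Hd]. exists d. split. apply cond_pos.
  intros y Hy. destruct (Req_dec y x) as [->|Hne].
  { rewrite !Rminus_diag, Rabs_R0. lra. }
  specialize (Hd (y - x) ltac:(lra) Hy). replace (x + (y - x)) with y in Hd by ring.
  assert (Hyx : 0 < Rabs (y - x)) by (apply Rabs_pos_lt; lra).
  replace (phi y - phi x) with (((phi y - phi x) / (y - x) - l) * (y - x) + l * (y - x))
    by (field; lra).
  eapply Rle_trans. apply Rabs_triang. rewrite !Rabs_mult. nra.
Qed.

(* The singular weight u^(th-1) is harmless against a factor k with
   k u = O(u) at 0: the product is continuous (and vanishes) at 0. *)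
Lemma weighted_cont_at0 th (k : R -> R) : 0 < th -> k 0 = 0 -> continuous k 0 ->
  (exists C d, 0 < d /\ forall u, Rabs u < d -> Rabs (k u) <= C * Rabs u) ->
  continuous (fun u => rpow u (th - 1) * k u) 0.
Proof.
  intros Hth Hk0 Hkc [C [d [Hd HC]]]. apply continuous_of_eps_delta. intros eps Heps.
  rewrite Hk0, Rmult_0_r.
  set (C' := Rabs C + 1). assert (HC' : 0 < C') by (unfold C'; assert (H := Rabs_pos C); lra).
  assert (HC2 : forall u, Rabs u < d -> Rabs (k u) <= C' * Rabs u).
  { intros u Hu. eapply Rle_trans. apply HC; auto. apply Rmult_le_compat_r. apply Rabs_pos.
    unfold C'. assert (H := Rle_abs C). lra. }
  destruct (eps_delta_of_continuous k 0 Hkc eps Heps) as [d2 [Hd2 H2]].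
  set (e1 := rpow (eps / C') (/ th)).
  assert (He1 : 0 < e1) by (apply rpow_gt0; apply Rdiv_lt_0_compat; auto).
  exists (Rmin (Rmin d d2) e1). split. { repeat apply Rmin_pos; auto. }
  intros u Hu. rewrite Rminus_0_r in Hu |- *.
  assert (Hm1 := Rmin_l (Rmin d d2) e1). assert (Hm2 := Rmin_r (Rmin d d2) e1).
  assert (Hm3 := Rmin_l d d2). assert (Hm4 := Rmin_r d d2).
  destruct (Rle_lt_dec u 0) as [Hu0|Hu0].
  - destruct (Req_dec th 1) as [->|Hne].
    + replace (1 - 1) with 0 by ring. rewrite rpow_exp0, Rmult_1_l.
      specialize (H2 u ltac:(rewrite Rminus_0_r; lra)). rewrite Hk0, Rminus_0_r in H2. auto.
    + rewrite rpow_nonpos by lra. rewrite Rmult_0_l, Rabs_R0. auto.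
  - rewrite Rabs_right in Hu by lra.
    assert (Hud : Rabs u < d) by (rewrite Rabs_right; lra).
    specialize (HC2 u Hud). rewrite (Rabs_right u) in HC2 by lra.
    rewrite Rabs_mult, (Rabs_right (rpow u (th - 1))) by (apply Rle_ge, rpow_ge0).
    eapply Rle_lt_trans. { apply Rmult_le_compat_l. apply rpow_ge0. exact HC2. }
    replace (rpow u (th - 1) * (C' * u)) with (C' * rpow u th).
    2: { replace th with ((th - 1) + 1) at 1 by ring. rewrite rpow_plus, rpow_exp1 by lra. ring. }
    assert (rpow u th < rpow e1 th) by (apply rpow_lt_base; lra).
    unfold e1 in H. rewrite rpow_rpow in H
      by (try (apply Rinv_neq_0_compat; lra); left; apply Rdiv_lt_0_compat; auto).
    rewrite Rinv_l, rpow_exp1 in H by (try lra; left; apply Rdiv_lt_0_compat; auto).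
    apply Rmult_lt_compat_l with (r := C') in H; auto.
    replace (C' * (eps / C')) with eps in H by (field; lra). auto.
Qed.

(* The quantity th * int_0^1 u^(th-1) (phi u - phi 0) du, which measures how
   far the Riemann-Liouville mean of phi is from phi 0. *)
Definition remainder_integrand (th : R) (phi : R -> R) (u : R) : R :=
  rpow u (th - 1) * (phi u - phi 0).

Definition frac_remainder (th : R) (phi : R -> R) : R :=
  th * RInt (remainder_integrand th phi) 0 1.

Lemma remainder_integrand_cont th phi dphi0 z : 0 < th ->
  derivable_pt_lim phi 0 dphi0 -> continuous phi z ->
  continuous (remainder_integrand th phi) z.
Proof.
  intros Hth Hd Hc. unfold remainder_integrand. destruct (Req_dec z 0) as [->|Hz0].
  - apply (weighted_cont_at0 th (fun u => phi u - phi 0)); auto. { ring. }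
    { apply cont_minus; auto. apply cont_const. }
    destruct (dlim_lipschitz phi 0 dphi0 Hd) as [d [Hd0 Hl]].
    exists (Rabs dphi0 + 1), d. split; auto. intros u Hu.
    rewrite <- (Rminus_0_r u) at 2. apply Hl. rewrite Rminus_0_r; auto.
  - apply cont_mult. apply rpow_cont_ne0; auto. apply cont_minus; auto. apply cont_const.
Qed.

Lemma nondecreasing_of_dlim (G dG : R -> R) l r : l <= r ->
  (forall x, l <= x <= r -> derivable_pt_lim G x (dG x)) ->
  (forall x, l <= x <= r -> 0 <= dG x) -> G l <= G r.
Proof.
  intros Hlr Hd Hpos. destruct (Req_dec l r) as [<-|Hne]. { lra. }
  destruct (MVT_gen G l r dG) as [x [Hx E]].
  - intros x Hx. apply is_derive_Reals, Hd.
    rewrite Rmin_left, Rmax_right in Hx by lra. lra.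
  - intros x Hx. apply continuity_pt_filterlim. eapply continuous_of_dlim. apply Hd.
    rewrite Rmin_left, Rmax_right in Hx by lra. lra.
  - rewrite Rmin_left, Rmax_right in Hx by lra.
    assert (0 <= dG x * (r - l)) by (apply Rmult_le_pos; [apply Hpos|]; lra). lra.
Qed.

(* Bounding the remainder by a majorant h of |phi'|, with H u = int_0^u h. *)
Section RemainderBound.
Variables (th c : R) (h : R -> R).
Hypothesis Hth : 0 < th.
Hypothesis Hh : forall z, continuous h z.

Definition majorant_primitive (u : R) : R := RInt h 0 u.

Lemma dlim_majorant_primitive u : derivable_pt_lim majorant_primitive u (h u).
Proof. apply dlim_RInt. auto. Qed.

Lemma majorant_primitive_cont u : continuous majorant_primitive u.
Proof. eapply continuous_of_dlim. apply dlim_majorant_primitive. Qed.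

Lemma majorant_primitive_0 : majorant_primitive 0 = 0.
Proof. unfold majorant_primitive. rewrite RInt_point. reflexivity. Qed.

(* Comparing c H with phi - phi 0 through their derivatives. *)
Lemma increment_bound (phi dphi : R -> R) :
  (forall u, 0 <= u <= 1 -> derivable_pt_lim phi u (dphi u)) ->
  (forall u, 0 <= u <= 1 -> Rabs (dphi u) <= c * h u) ->
  forall u, 0 <= u <= 1 -> Rabs (phi u - phi 0) <= c * majorant_primitive u.
Proof.
  intros Hd Hb u Hu.
  assert (HcH : forall x, derivable_pt_lim (fun v => c * majorant_primitive v) x (c * h x)).
  { intros x. apply (dlim_value _ _ (0 * majorant_primitive x + c * h x)). ring.
    apply (dlim_mult (fun _ => c) majorant_primitive). apply dlim_const.
    apply dlim_majorant_primitive. }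
  assert (Hd0 : forall x, 0 <= x <= u -> derivable_pt_lim (fun v => phi v - phi 0) x (dphi x)).
  { intros x Hx. apply (dlim_value _ _ (dphi x - 0)). ring.
    apply (dlim_minus phi (fun _ => phi 0)). apply Hd; lra. apply dlim_const. }
  assert (Hup := nondecreasing_of_dlim (fun v => c * majorant_primitive v - (phi v - phi 0))
                   (fun v => c * h v - dphi v) 0 u ltac:(lra)).
  assert (Hlow := nondecreasing_of_dlim (fun v => c * majorant_primitive v + (phi v - phi 0))
                   (fun v => c * h v + dphi v) 0 u ltac:(lra)).
  cbv beta in Hup, Hlow. rewrite majorant_primitive_0, Rminus_diag, Rmult_0_r in Hup, Hlow.
  rewrite Rminus_0_r in Hup. rewrite Rplus_0_r in Hlow.
  apply Rabs_le. split.
  - enough (0 <= c * majorant_primitive u + (phi u - phi 0)) by lra. apply Hlow.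
    + intros x Hx. apply (dlim_plus (fun v => c * majorant_primitive v) (fun v => phi v - phi 0)).
      apply HcH. apply Hd0; lra.
    + intros x Hx. assert (B := Hb x ltac:(lra)). apply Rabs_le_between in B. lra.
  - enough (0 <= c * majorant_primitive u - (phi u - phi 0)) by lra. apply Hup.
    + intros x Hx. apply (dlim_minus (fun v => c * majorant_primitive v) (fun v => phi v - phi 0)).
      apply HcH. apply Hd0; lra.
    + intros x Hx. assert (B := Hb x ltac:(lra)). apply Rabs_le_between in B. lra.
Qed.

(* Integration by parts with (u^th - 1) H u:
   th int_0^1 u^(th-1) H u du = int_0^1 (1 - u^th) h u du. *)
Lemma majorant_by_parts :
  th * RInt (remainder_integrand th majorant_primitive) 0 1 =
  RInt (fun u => (1 - rpow u th) * h u) 0 1.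
Proof.
  set (jH := remainder_integrand th majorant_primitive).
  set (Fh := fun u => (1 - rpow u th) * h u).
  set (Phi := fun u => (rpow u th - 1) * majorant_primitive u).
  assert (HjH : forall z, continuous jH z).
  { intros z. apply (remainder_integrand_cont th _ (h 0)); auto.
    apply dlim_majorant_primitive. apply majorant_primitive_cont. }
  assert (HFh : forall z, continuous Fh z).
  { intros z. unfold Fh. apply cont_mult; auto. apply cont_minus. apply cont_const.
    apply rpow_cont; lra. }
  assert (HPhi : forall z, continuous Phi z).
  { intros z. unfold Phi. apply cont_mult. apply cont_minus. apply rpow_cont; lra.
    apply cont_const. apply majorant_primitive_cont. }
  assert (E0 : RInt (fun u => th * jH u + (-1) * Fh u) 0 1 = Phi 1 - Phi 0).
  { apply FTC_open; auto. lra.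
    - intros; apply cont_plus; apply cont_mult; auto; apply cont_const.
    - intros z Hz. unfold Phi.
      apply (dlim_value _ _ ((th * rpow z (th - 1) - 0) * majorant_primitive z
                             + (rpow z th - 1) * h z)).
      { unfold jH, Fh, remainder_integrand. rewrite majorant_primitive_0. ring. }
      apply (dlim_mult (fun u => rpow u th - 1) majorant_primitive).
      apply (dlim_minus (fun u => rpow u th) (fun _ => 1)). apply dlim_rpow; lra. apply dlim_const.
      apply dlim_majorant_primitive. }
  rewrite RInt_lin in E0 by (apply ex_RInt_cont_all; auto).
  unfold Phi in E0. rewrite rpow_base1, rpow_base0, majorant_primitive_0 in E0 by lra. lra.
Qed.

(* |R| <= th int_0^1 u^(th-1) |phi u - phi 0| <= c th int_0^1 u^(th-1) H u,
   which is c int_0^1 (1 - u^th) h u by [majorant_by_parts]. *)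
Lemma remainder_bound (phi dphi : R -> R) :
  (forall u, 0 <= u <= 1 -> derivable_pt_lim phi u (dphi u)) ->
  (forall u, 0 <= u <= 1 -> Rabs (dphi u) <= c * h u) ->
  Rabs (frac_remainder th phi) <= c * RInt (fun u => (1 - rpow u th) * h u) 0 1.
Proof.
  intros Hd Hb. rewrite <- majorant_by_parts. unfold frac_remainder.
  assert (Hk : forall z, 0 <= z <= 1 -> continuous (remainder_integrand th phi) z).
  { intros z Hz. apply (remainder_integrand_cont th _ (dphi 0)); auto. apply Hd; lra.
    eapply continuous_of_dlim. apply Hd; lra. }
  assert (HjH : forall z, continuous (remainder_integrand th majorant_primitive) z).
  { intros z. apply (remainder_integrand_cont th _ (h 0)); auto.
    apply dlim_majorant_primitive. apply majorant_primitive_cont. }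
  rewrite Rabs_mult, Rabs_right by lra.
  replace (c * (th * RInt (remainder_integrand th majorant_primitive) 0 1))
    with (th * (c * RInt (remainder_integrand th majorant_primitive) 0 1)) by ring.
  apply Rmult_le_compat_l. lra.
  rewrite <- (RInt_scal (V:=R_CompleteNormedModule)) by (apply ex_RInt_cont_all; auto).
  eapply Rle_trans. { apply abs_RInt_le. lra. apply ex_RInt_cont; auto. lra. }
  apply RInt_le. lra.
  - apply ex_RInt_cont. lra. intros; apply cont_abs; auto.
  - apply ex_RInt_cont_all. intros; apply cont_mult; auto; apply cont_const.
  - intros x Hx. unfold remainder_integrand, scal; simpl; unfold mult; simpl.
    rewrite majorant_primitive_0, Rminus_0_r, Rabs_mult.
    rewrite (Rabs_right (rpow x (th - 1))) by (apply Rle_ge, rpow_ge0).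
    assert (H := increment_bound phi dphi Hd Hb x ltac:(lra)).
    assert (H' := rpow_ge0 x (th - 1)). nra.
Qed.

End RemainderBound.

(* The right-hand side of the (alpha, m)-convexity inequality along a segment,
   u^alpha P + m (1 - u^alpha) Q, and its q-th root, which majorises |f'|
   along the segment. *)
Section ConvexProfile.
Variables (alpha m P Q q : R).
Hypothesis Halpha : 0 <= alpha.
Hypothesis Hm : 0 <= m.
Hypothesis HP : 0 <= P.
Hypothesis HQ : 0 <= Q.
Hypothesis Hq : 1 < q.

Definition convex_profile (u : R) : R := rpow u alpha * P + m * (1 - rpow u alpha) * Q.
Definition profile_root (u : R) : R := rpow (convex_profile u) (/ q).

Lemma convex_profile_cont z : continuous convex_profile z.
Proof.
  unfold convex_profile. apply cont_plus.
  - apply cont_mult. apply rpow_cont; lra. apply cont_const.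
  - apply cont_mult; [|apply cont_const]. apply cont_mult. apply cont_const.
    apply cont_minus. apply cont_const. apply rpow_cont; lra.
Qed.

Lemma profile_root_cont z : continuous profile_root z.
Proof.
  unfold profile_root. apply (cont_comp convex_profile (fun v => rpow v (/ q))).
  apply convex_profile_cont. apply rpow_cont. left; apply Rinv_0_lt_compat; lra.
Qed.

Lemma convex_profile_ge0 u : 0 <= u <= 1 -> 0 <= convex_profile u.
Proof.
  intros Hu. unfold convex_profile.
  assert (H1 := rpow_ge0 u alpha). assert (H2 := rpow_le1 u alpha Halpha Hu).
  apply Rplus_le_le_0_compat. apply Rmult_le_pos; lra.
  apply Rmult_le_pos; [apply Rmult_le_pos|]; lra.
Qed.

Lemma profile_root_pow u : 0 <= u <= 1 -> rpow (profile_root u) q = convex_profile u.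
Proof.
  intros Hu. unfold profile_root. rewrite rpow_rpow, Rinv_l, rpow_exp1; try lra.
  apply convex_profile_ge0; auto. apply convex_profile_ge0; auto.
  apply Rinv_neq_0_compat; lra.
Qed.

Lemma convex_profile_integral : RInt convex_profile 0 1 = (P + alpha * m * Q) / (alpha + 1).
Proof.
  set (Psi := fun u => rpow u (alpha + 1) * / (alpha + 1) * P
                       + m * Q * (u - rpow u (alpha + 1) * / (alpha + 1))).
  assert (E : Psi 1 - Psi 0 = (P + alpha * m * Q) / (alpha + 1)).
  { unfold Psi. rewrite rpow_base1, rpow_base0 by lra. field. lra. }
  assert (HPsi : forall z, continuous Psi z).
  { intros z. unfold Psi. apply cont_plus.
    - apply cont_mult; [|apply cont_const]. apply cont_mult; [|apply cont_const].
      apply rpow_cont; lra.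
    - apply cont_mult. apply cont_const. apply cont_minus. apply cont_id.
      apply cont_mult; [|apply cont_const]. apply rpow_cont; lra. }
  assert (Hd : forall z, 0 < z -> derivable_pt_lim (fun y => rpow y (alpha + 1) * / (alpha + 1)) z
                                   (rpow z alpha)).
  { intros z Hz. apply (dlim_value _ _ ((alpha + 1) * rpow z (alpha + 1 - 1) * / (alpha + 1)
                                        + rpow z (alpha + 1) * 0)).
    { replace (alpha + 1 - 1) with alpha by ring. field. lra. }
    apply (dlim_mult (fun y => rpow y (alpha + 1)) (fun _ => / (alpha + 1))).
    apply dlim_rpow; lra. apply dlim_const. }
  rewrite <- E. apply (FTC_open Psi convex_profile 0 1); auto. lra.
  - intros; apply convex_profile_cont.
  - intros z Hz. unfold Psi.
    apply (dlim_value _ _ (rpow z alpha * P + rpow z (alpha + 1) * / (alpha + 1) * 0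
                           + (0 * (z - rpow z (alpha + 1) * / (alpha + 1))
                              + m * Q * (1 - rpow z alpha)))).
    { unfold convex_profile. ring. }
    apply (dlim_plus (fun y => rpow y (alpha + 1) * / (alpha + 1) * P)
                     (fun y => m * Q * (y - rpow y (alpha + 1) * / (alpha + 1)))).
    + apply (dlim_mult (fun y => rpow y (alpha + 1) * / (alpha + 1)) (fun _ => P)).
      apply Hd; lra. apply dlim_const.
    + apply (dlim_mult (fun _ => m * Q) (fun y => y - rpow y (alpha + 1) * / (alpha + 1))).
      apply dlim_const.
      apply (dlim_minus (fun y => y) (fun y => rpow y (alpha + 1) * / (alpha + 1))).
      apply dlim_id. apply Hd; lra.
Qed.

Lemma profile_root_vanishes u : 0 <= u <= 1 ->
  (P + alpha * m * Q) / (alpha + 1) = 0 -> profile_root u = 0.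
Proof.
  intros Hu HZ. unfold profile_root.
  assert (HPQ : P + alpha * m * Q = 0).
  { apply (Rmult_eq_reg_r (/ (alpha + 1))). rewrite Rmult_0_l. exact HZ.
    apply Rinv_neq_0_compat; lra. }
  assert (0 <= alpha * m * Q) by (apply Rmult_le_pos; [apply Rmult_le_pos|]; lra).
  assert (HP0 : P = 0) by lra.
  replace (convex_profile u) with 0. { apply rpow_base0, Rinv_neq_0_compat; lra. }
  unfold convex_profile. rewrite HP0.
  destruct (Req_dec alpha 0) as [->|Ha0]. { rewrite rpow_exp0. ring. }
  assert (HmQ : alpha * (m * Q) = 0) by lra.
  apply Rmult_integral in HmQ. destruct HmQ as [|HmQ]; [lra|].
  replace (m * (1 - rpow u alpha) * Q) with (m * Q * (1 - rpow u alpha)) by ring.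
  rewrite HmQ. ring.
Qed.

Lemma profile_remainder_bound th p c (phi dphi : R -> R) :
  0 < th -> p = q / (q - 1) -> 0 <= c ->
  (forall u, 0 <= u <= 1 -> derivable_pt_lim phi u (dphi u)) ->
  (forall u, 0 <= u <= 1 -> Rabs (dphi u) <= c * profile_root u) ->
  Rabs (frac_remainder th phi) <=
    c * (rpow (RInt (beta_kernel th p) 0 1) (/ p)
         * rpow ((P + alpha * m * Q) / (alpha + 1)) (/ q)).
Proof.
  intros Hth Hp Hc Hd Hb.
  assert (Hp1 : 1 < p).
  { rewrite Hp. apply Rmult_lt_reg_r with (q - 1). lra.
    unfold Rdiv. rewrite Rmult_assoc, Rinv_l by lra. lra. }
  eapply Rle_trans.
  { apply (remainder_bound th c profile_root Hth profile_root_cont phi dphi Hd Hb). }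
  apply Rmult_le_compat_l; auto.
  assert (HZ0 : 0 <= (P + alpha * m * Q) / (alpha + 1)).
  { apply Rdiv_le_0_compat; [|lra].
    assert (0 <= alpha * m * Q) by (apply Rmult_le_pos; [apply Rmult_le_pos|]; lra). lra. }
  destruct (Rle_lt_or_eq_dec _ _ HZ0) as [HZ|HZ].
  - rewrite <- convex_profile_integral in HZ |- *.
    rewrite <- (RInt_ext (fun u => rpow (profile_root u) q) convex_profile)
      by (intros x Hx; rewrite Rmin_left, Rmax_right in Hx by lra; apply profile_root_pow; lra).
    apply (holder (fun u => 1 - rpow u th) profile_root p q Hq Hp).
    + intros; apply cont_minus; [apply cont_const|apply rpow_cont; lra].
    + apply profile_root_cont.
    + intros u Hu. split. assert (rpow u th <= 1) by (apply rpow_le1; lra). lra. apply rpow_ge0.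
    + apply beta_kernel_integral_pos; lra.
    + rewrite (RInt_ext _ convex_profile); auto.
      intros x Hx. rewrite Rmin_left, Rmax_right in Hx by lra. apply profile_root_pow; lra.
  - rewrite (RInt_ext _ (fun _ => 0)).
    + rewrite RInt_const_R, Rmult_0_r. apply Rmult_le_pos; apply rpow_ge0.
    + intros x Hx. rewrite Rmin_left, Rmax_right in Hx by lra.
      rewrite (profile_root_vanishes x); [apply Rmult_0_r | lra | symmetry; exact HZ].
Qed.

End ConvexProfile.

(* For phi differentiable on a neighbourhood of [0, 1], the function
   W v = v^th phi 0 / th + int_0^v u^(th-1) (phi u - phi 0) du
   is a primitive of v^(th-1) phi v on (0, 1 + e), continuous on (-e, 1 + e). *)
Section WeightedPrimitive.
Variables (th e : R) (phi dphi : R -> R).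
Hypothesis Hth : 0 < th.
Hypothesis He : 0 < e.
Hypothesis Hphi : forall u, - e < u < 1 + e -> derivable_pt_lim phi u (dphi u).

Definition weighted_primitive (v : R) : R :=
  rpow v th * phi 0 / th + RInt (remainder_integrand th phi) 0 v.

Lemma dlim_remainder_integral v : - e < v < 1 + e ->
  derivable_pt_lim (fun w => RInt (remainder_integrand th phi) 0 w) v
    (remainder_integrand th phi v).
Proof.
  intros Hv. apply (dlim_RInt_loc _ (- e) (1 + e)); try lra.
  intros z Hz. apply (remainder_integrand_cont th phi (dphi 0)); auto. apply Hphi; lra.
  eapply continuous_of_dlim. apply Hphi; auto.
Qed.

Lemma weighted_primitive_cont v : - e < v < 1 + e -> continuous weighted_primitive v.
Proof.
  intros Hv. unfold weighted_primitive. apply cont_plus.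
  - apply cont_mult; [|apply cont_const]. apply cont_mult; [|apply cont_const].
    apply rpow_cont; lra.
  - eapply continuous_of_dlim. apply dlim_remainder_integral; auto.
Qed.

Lemma dlim_weighted_primitive v : 0 < v < 1 + e ->
  derivable_pt_lim weighted_primitive v (rpow v (th - 1) * phi v).
Proof.
  intros Hv. unfold weighted_primitive.
  apply (dlim_value _ _ ((th * rpow v (th - 1) * phi 0 + rpow v th * 0) * / th
                         + rpow v th * phi 0 * 0 + remainder_integrand th phi v)).
  { unfold remainder_integrand. field. lra. }
  apply (dlim_plus (fun w => rpow w th * phi 0 / th)
                   (fun w => RInt (remainder_integrand th phi) 0 w));
    [|apply dlim_remainder_integral; lra].
  apply (dlim_mult (fun w => rpow w th * phi 0) (fun _ => / th)); [|apply dlim_const].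
  apply (dlim_mult (fun w => rpow w th) (fun _ => phi 0)); [|apply dlim_const].
  apply dlim_rpow. lra.
Qed.

Lemma weighted_primitive_0 : weighted_primitive 0 = 0.
Proof.
  unfold weighted_primitive. rewrite rpow_base0, RInt_point by lra.
  unfold zero; simpl. field. lra.
Qed.

Lemma weighted_primitive_1 : th * weighted_primitive 1 = phi 0 + frac_remainder th phi.
Proof. unfold weighted_primitive, frac_remainder. rewrite rpow_base1. field. lra. Qed.

End WeightedPrimitive.

Definition segment_restriction (f : R -> R) (E X v : R) : R := f (E + v * (X - E)).

Lemma dlim_segment_restriction f f' E X u :
  derivable_pt_lim f (E + u * (X - E)) (f' (E + u * (X - E))) ->
  derivable_pt_lim (segment_restriction f E X) u ((X - E) * f' (E + u * (X - E))).
Proof.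
  intros Hf. unfold segment_restriction.
  apply (dlim_value _ _ (f' (E + u * (X - E)) * (0 + (1 * (X - E) + u * 0)))). ring.
  apply (dlim_comp (fun v => E + v * (X - E)) f); auto.
  apply (dlim_plus (fun _ => E) (fun v => v * (X - E))). apply dlim_const.
  apply (dlim_mult (fun v => v) (fun _ => X - E)). apply dlim_id. apply dlim_const.
Qed.

(* Pulling W back along the segment from E to X: with phi the restriction of f,
   F s = |X - E|^th sgn (X - E) W ((s - E) / (X - E)) is a primitive of
   |s - E|^(th-1) f s between E and X, whichever of E, X is larger. *)
Section SegmentPrimitive.
Variables (f f' : R -> R) (th dl E X : R).
Hypothesis Hth : 0 < th.
Hypothesis Hdl : 0 < dl.
Hypothesis HEX : E <> X.
Hypothesis Hf : forall s, Rmin E X - dl < s < Rmax E X + dl -> derivable_pt_lim f s (f' s).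

Definition segment_primitive (s : R) : R :=
  rpow (Rabs (X - E)) th * (Rabs (X - E) / (X - E))
  * weighted_primitive th (segment_restriction f E X) ((s - E) / (X - E)).

Lemma Rabs_dist_pos : 0 < Rabs (X - E).
Proof. apply Rabs_pos_lt. lra. Qed.

Lemma segment_neighbourhood u :
  - (dl / Rabs (X - E)) < u < 1 + dl / Rabs (X - E) ->
  Rmin E X - dl < E + u * (X - E) < Rmax E X + dl.
Proof.
  intros Hu. assert (HD := Rabs_dist_pos). set (D := Rabs (X - E)) in *.
  assert (HeD : dl / D * D = dl) by (field; lra).
  assert (Hr : - dl < u * D < D + dl) by nra.
  destruct (Rle_lt_dec E X) as [HEX'|HXE].
  - rewrite Rmin_left, Rmax_right by lra. unfold D in Hr. rewrite Rabs_right in Hr by lra. lra.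
  - rewrite Rmin_right, Rmax_left by lra. unfold D in Hr. rewrite Rabs_left in Hr by lra. nra.
Qed.

Lemma segment_restriction_dlim u :
  - (dl / Rabs (X - E)) < u < 1 + dl / Rabs (X - E) ->
  derivable_pt_lim (segment_restriction f E X) u ((X - E) * f' (E + u * (X - E))).
Proof. intros Hu. apply dlim_segment_restriction, Hf, segment_neighbourhood; auto. Qed.

Lemma segment_param_range s : Rmin E X <= s <= Rmax E X -> 0 <= (s - E) / (X - E) <= 1.
Proof.
  intros Hs. destruct (Rle_lt_dec E X) as [HEX'|HXE].
  - rewrite Rmin_left, Rmax_right in Hs by lra. split.
    + apply Rdiv_le_0_compat; lra.
    + apply Rmult_le_reg_r with (X - E). lra. unfold Rdiv. rewrite Rmult_assoc, Rinv_l; lra.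
  - rewrite Rmin_right, Rmax_left in Hs by lra.
    replace ((s - E) / (X - E)) with ((E - s) / (E - X)) by (field; lra). split.
    + apply Rdiv_le_0_compat; lra.
    + apply Rmult_le_reg_r with (E - X). lra. unfold Rdiv. rewrite Rmult_assoc, Rinv_l; lra.
Qed.

Lemma segment_param_open s : Rmin E X < s < Rmax E X -> 0 < (s - E) / (X - E) < 1.
Proof.
  intros Hs. destruct (Rle_lt_dec E X) as [HEX'|HXE].
  - rewrite Rmin_left, Rmax_right in Hs by lra. split.
    + apply Rdiv_lt_0_compat; lra.
    + apply Rmult_lt_reg_r with (X - E). lra. unfold Rdiv. rewrite Rmult_assoc, Rinv_l; lra.
  - rewrite Rmin_right, Rmax_left in Hs by lra.
    replace ((s - E) / (X - E)) with ((E - s) / (E - X)) by (field; lra). split.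
    + apply Rdiv_lt_0_compat; lra.
    + apply Rmult_lt_reg_r with (E - X). lra. unfold Rdiv. rewrite Rmult_assoc, Rinv_l; lra.
Qed.

Lemma segment_primitive_cont s : Rmin E X <= s <= Rmax E X -> continuous segment_primitive s.
Proof.
  intros Hs. assert (HD := Rabs_dist_pos). assert (Hv := segment_param_range s Hs).
  assert (0 < dl / Rabs (X - E)) by (apply Rdiv_lt_0_compat; auto).
  unfold segment_primitive. apply cont_mult. apply cont_const.
  apply (cont_comp (fun s => (s - E) / (X - E))).
  - apply (cont_mult (fun s => s - E) (fun _ => / (X - E))); [|apply cont_const].
    apply cont_minus. apply cont_id. apply cont_const.
  - apply (weighted_primitive_cont th (dl / Rabs (X - E)) _ (fun u => (X - E) * f' (E + u * (X - E)))); auto.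
    apply segment_restriction_dlim. lra.
Qed.

Lemma segment_primitive_dlim s : Rmin E X < s < Rmax E X ->
  derivable_pt_lim segment_primitive s (rpow (Rabs (s - E)) (th - 1) * f s).
Proof.
  intros Hs. assert (HD := Rabs_dist_pos). set (v := (s - E) / (X - E)).
  assert (Hv : 0 < v < 1) by (apply segment_param_open; auto).
  assert (Hsv : Rabs (s - E) = v * Rabs (X - E)).
  { unfold v. replace (s - E) with ((s - E) / (X - E) * (X - E)) at 1 by (field; lra).
    rewrite Rabs_mult, Rabs_right by (fold v; lra). reflexivity. }
  assert (Hfs : segment_restriction f E X v = f s).
  { unfold segment_restriction, v. f_equal. field. lra. }
  unfold segment_primitive.
  apply (dlim_value _ _ (0 * weighted_primitive th (segment_restriction f E X) v
           + rpow (Rabs (X - E)) th * (Rabs (X - E) / (X - E))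
             * (rpow v (th - 1) * segment_restriction f E X v * ((1 - 0) * / (X - E) + (s - E) * 0)))).
  { rewrite Hfs, Hsv, rpow_mult_distr by lra.
    replace (rpow (Rabs (X - E)) th) with (rpow (Rabs (X - E)) (th - 1) * Rabs (X - E))
      by (replace th with (th - 1 + 1) at 2 by ring; rewrite rpow_plus, rpow_exp1; lra).
    assert (HD2 : Rabs (X - E) * Rabs (X - E) = (X - E) * (X - E)).
    { rewrite <- Rabs_mult. apply Rabs_right, Rle_ge, Rle_0_sqr. }
    transitivity (rpow v (th - 1) * rpow (Rabs (X - E)) (th - 1) * f s
                  * (Rabs (X - E) * Rabs (X - E) / ((X - E) * (X - E)))).
    - field. lra.
    - rewrite HD2. field. lra. }
  apply (dlim_mult (fun _ => rpow (Rabs (X - E)) th * (Rabs (X - E) / (X - E)))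
           (fun s => weighted_primitive th (segment_restriction f E X) ((s - E) / (X - E)))).
  apply dlim_const.
  apply (dlim_comp (fun s => (s - E) / (X - E)) (weighted_primitive th (segment_restriction f E X))).
  - apply (dlim_mult (fun s => s - E) (fun _ => / (X - E))); [|apply dlim_const].
    apply (dlim_minus (fun s => s) (fun _ => E)). apply dlim_id. apply dlim_const.
  - fold v. apply (dlim_weighted_primitive th (dl / Rabs (X - E)) _ (fun u => (X - E) * f' (E + u * (X - E)))); auto.
    + apply Rdiv_lt_0_compat; auto.
    + apply segment_restriction_dlim.
    + assert (0 < dl / Rabs (X - E)) by (apply Rdiv_lt_0_compat; auto). lra.
Qed.

Lemma segment_primitive_increment :
  th * (segment_primitive X - segment_primitive E) =
  rpow (Rabs (X - E)) th * (Rabs (X - E) / (X - E))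
  * (f E + frac_remainder th (segment_restriction f E X)).
Proof.
  unfold segment_primitive. replace ((X - E) / (X - E)) with 1 by (field; lra).
  replace ((E - E) / (X - E)) with 0 by (field; lra).
  rewrite weighted_primitive_0 by auto.
  replace (f E) with (segment_restriction f E X 0) by (unfold segment_restriction; f_equal; ring).
  rewrite <- weighted_primitive_1 by auto. ring.
Qed.

End SegmentPrimitive.

Lemma improper_segment (f f' g : R -> R) th dl E X :
  0 < th -> 0 < dl -> E <> X ->
  (forall s, Rmin E X - dl < s < Rmax E X + dl -> derivable_pt_lim f s (f' s)) ->
  (forall s, Rmin E X < s < Rmax E X -> g s = rpow (Rabs (s - E)) (th - 1) * f s) ->
  improper_int g (Rmin E X) (Rmax E X)
    (segment_primitive f th E X (Rmax E X) - segment_primitive f th E X (Rmin E X)).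
Proof.
  intros Hth Hdl HEX Hf Hg.
  assert (Hmm : Rmin E X < Rmax E X).
  { destruct (Rle_lt_dec E X).
    - rewrite Rmin_left, Rmax_right; lra.
    - rewrite Rmin_right, Rmax_left; lra. }
  assert (Hmin := Rmin_l E X). assert (Hmax := Rmax_l E X).
  assert (Hmin' := Rmin_r E X). assert (Hmax' := Rmax_r E X).
  apply improper_int_of_primitive; auto.
  - apply (segment_primitive_cont f f' th dl); auto. lra.
  - apply (segment_primitive_cont f f' th dl); auto. lra.
  - intros z Hz. rewrite (Hg z Hz). split.
    { apply (segment_primitive_dlim f f' th dl); auto. }
    assert (HzE : z - E <> 0) by (intros H; destruct (Rle_lt_dec E X) as [H'|H'];
      [rewrite Rmin_left in Hz | rewrite Rmax_left in Hz]; lra).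
    apply (continuous_ext_loc _ (fun s => rpow (Rabs (s - E)) (th - 1) * f s)).
    + apply locally_of_ball. exists (Rmin (z - Rmin E X) (Rmax E X - z)).
      split. { apply Rmin_pos; lra. }
      intros y Hy. apply Rabs_def2 in Hy.
      assert (H1 := Rmin_l (z - Rmin E X) (Rmax E X - z)).
      assert (H2 := Rmin_r (z - Rmin E X) (Rmax E X - z)).
      symmetry. apply Hg. lra.
    + apply cont_mult.
      * apply (cont_comp (fun s => Rabs (s - E)) (fun v => rpow v (th - 1))).
        apply cont_abs, cont_minus. apply cont_id. apply cont_const.
        apply rpow_cont_ne0. apply Rabs_no_R0. auto.
      * eapply continuous_of_dlim. apply Hf. lra.
Qed.

Lemma Jleft_eval (f f' : R -> R) th dl A X :
  0 < th -> 0 < dl -> A <= X ->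
  (forall s, A - dl < s < X + dl -> derivable_pt_lim f s (f' s)) ->
  Gamma (th + 1) * Jleft th f A X =
  rpow (X - A) th * (f A + frac_remainder th (segment_restriction f A X)).
Proof.
  intros Hth Hdl HAX Hf. destruct (Gamma_recursion th Hth) as [HG Hrec].
  unfold Jleft. destruct (Rlt_dec A X) as [HAX'|HAX'].
  2: { replace X with A by lra. rewrite Rminus_diag, rpow_base0 by lra. ring. }
  assert (Hmin : Rmin A X = A) by (apply Rmin_left; lra).
  assert (Hmax : Rmax A X = X) by (apply Rmax_right; lra).
  assert (Himp := improper_segment f f' (fun s => rpow (s - A) (th - 1) * f s) th dl A X).
  rewrite Hmin, Hmax in Himp.
  assert (Hg : forall s, A < s < X -> rpow (s - A) (th - 1) * f s = rpow (Rabs (s - A)) (th - 1) * f s).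
  { intros s Hs. rewrite Rabs_right by lra. reflexivity. }
  rewrite (ImpInt_val _ _ _ _ HAX' (Himp Hth Hdl ltac:(lra) Hf Hg)).
  rewrite Hrec. transitivity (th * (segment_primitive f th A X X - segment_primitive f th A X A)).
  { field. lra. }
  rewrite segment_primitive_increment by lra.
  rewrite Rabs_right by lra. field. lra.
Qed.

Lemma Jright_eval (f f' : R -> R) th dl X B :
  0 < th -> 0 < dl -> X <= B ->
  (forall s, X - dl < s < B + dl -> derivable_pt_lim f s (f' s)) ->
  Gamma (th + 1) * Jright th f X B =
  rpow (B - X) th * (f B + frac_remainder th (segment_restriction f B X)).
Proof.
  intros Hth Hdl HXB Hf. destruct (Gamma_recursion th Hth) as [HG Hrec].
  unfold Jright. destruct (Rlt_dec X B) as [HXB'|HXB'].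
  2: { replace X with B by lra. rewrite Rminus_diag, rpow_base0 by lra. ring. }
  assert (Hmin : Rmin B X = X) by (apply Rmin_right; lra).
  assert (Hmax : Rmax B X = B) by (apply Rmax_left; lra).
  assert (Himp := improper_segment f f' (fun s => rpow (B - s) (th - 1) * f s) th dl B X).
  rewrite Hmin, Hmax in Himp.
  assert (Hg : forall s, X < s < B -> rpow (B - s) (th - 1) * f s = rpow (Rabs (s - B)) (th - 1) * f s).
  { intros s Hs. rewrite Rabs_left by lra. replace (- (s - B)) with (B - s) by ring. reflexivity. }
  rewrite (ImpInt_val _ _ _ _ HXB' (Himp Hth Hdl ltac:(lra) Hf Hg)).
  rewrite Hrec.
  transitivity (- (th * (segment_primitive f th B X X - segment_primitive f th B X B))).
  { field. lra. }
  rewrite segment_primitive_increment by lra.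
  rewrite Rabs_left by lra. replace (- (X - B)) with (B - X) by ring. field. lra.
Qed.

Section SegmentBound.
Variables (f f' : R -> R) (m alpha a b q p : R).
Hypothesis Hm : 0 < m <= 1.
Hypothesis Halpha : 0 <= alpha.
Hypothesis Ha0 : 0 <= a.
Hypothesis Hder : forall s, m * a <= s <= b -> derivable_pt_lim f s (f' s).
Hypothesis Hconv : alpha_m_convex alpha m (fun z => m * a <= z <= b)
                     (fun z => rpow (Rabs (f' z)) q).
Hypothesis Hq : 1 < q.
Hypothesis Hp : p = q / (q - 1).

(* Taking q-th roots in the convexity inequality. *)
Lemma convexity_majorant (X Y u : R) : m * a <= X <= b -> m * a <= Y <= b -> 0 <= u <= 1 ->
  m * a <= u * X + m * (1 - u) * Y <= b ->
  Rabs (f' (u * X + m * (1 - u) * Y)) <=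
    profile_root alpha m (rpow (Rabs (f' X)) q) (rpow (Rabs (f' Y)) q) q u.
Proof.
  intros HX HY Hu HK. assert (H := Hconv X Y u HX HY Hu HK).
  unfold profile_root, convex_profile.
  rewrite <- (rpow_inv_pow (Rabs (f' (u * X + m * (1 - u) * Y))) q) by (try apply Rabs_pos; lra).
  apply rpow_le_base. left; apply Rinv_0_lt_compat; lra. split. apply rpow_ge0. exact H.
Qed.

(* Along phi u = f (m E + u m (x - E)), |phi'| <= m |x - E| profile_root u by
   convexity between the points m x and E; conclude with
   [profile_remainder_bound] and the Beta integral. *)
Lemma segment_remainder_bound x E th : a <= x <= b -> a <= E <= b -> 0 < th ->
  Rabs (frac_remainder th (segment_restriction f (m * E) (m * x))) <=
    m * Rabs (x - E) *
    (rpow (/ th * Beta (p + 1) (/ th)) (/ p)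
     * rpow ((rpow (Rabs (f' (m * x))) q + alpha * m * rpow (Rabs (f' E)) q) / (alpha + 1)) (/ q)).
Proof.
  intros Hx HE Hth.
  assert (Hp1 : 0 < p).
  { rewrite Hp. apply Rdiv_lt_0_compat; lra. }
  rewrite Beta_kernel_integral by lra.
  assert (Hcancel : forall K : R, / th * (th * K) = K) by (intros; field; lra).
  rewrite Hcancel.
  assert (Hpt : forall u, 0 <= u <= 1 ->
            m * E + u * (m * x - m * E) = u * (m * x) + m * (1 - u) * E) by (intros; ring).
  assert (Hin : forall u, 0 <= u <= 1 -> m * a <= u * (m * x) + m * (1 - u) * E <= b).
  { intros u Hu. assert (HX : m * a <= m * x <= b) by (split; nra).
    assert (HY : m * a <= m * E <= b) by (split; nra).
    replace (u * (m * x) + m * (1 - u) * E) with (u * (m * x) + (1 - u) * (m * E)) by ring.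
    set (X := m * x) in *. set (Y := m * E) in *. split; nra. }
  apply (profile_remainder_bound alpha m _ _ q ltac:(lra) ltac:(lra) (rpow_ge0 _ _) (rpow_ge0 _ _)
           Hq th p _ _ (fun u => (m * x - m * E) * f' (m * E + u * (m * x - m * E))) Hth Hp).
  - apply Rmult_le_pos. lra. apply Rabs_pos.
  - intros u Hu. apply dlim_segment_restriction, Hder. rewrite Hpt; auto.
  - intros u Hu. cbv beta. rewrite Hpt by auto.
    replace (m * x - m * E) with (m * (x - E)) by ring.
    rewrite !Rabs_mult, (Rabs_right m) by lra. apply Rmult_le_compat_l.
    { apply Rmult_le_pos. lra. apply Rabs_pos. }
    apply convexity_majorant; auto; split; nra.
Qed.

End SegmentBound.

Lemma interior_neighbourhood (I : R -> Prop) (l r : R) : is_interval I -> l < r ->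
  interior I l -> interior I r ->
  exists dl, 0 < dl /\ forall s, l - dl < s < r + dl -> interior I s.
Proof.
  intros HI Hlr [d1 H1] [d2 H2]. exists (Rmin d1 d2). split. { apply Rmin_pos; apply cond_pos. }
  intros s Hs. assert (Hm1 := Rmin_l d1 d2). assert (Hm2 := Rmin_r d1 d2).
  assert (Il : I l) by (apply H1; unfold disc; rewrite Rminus_diag, Rabs_R0; apply cond_pos).
  assert (Ir : I r) by (apply H2; unfold disc; rewrite Rminus_diag, Rabs_R0; apply cond_pos).
  assert (Hd : 0 < Rmin (s - (l - Rmin d1 d2)) (r + Rmin d1 d2 - s)) by (apply Rmin_pos; lra).
  exists (mkposreal _ Hd). intros y Hy. unfold disc in Hy; simpl in Hy. apply Rabs_def2 in Hy.
  assert (Hm3 := Rmin_l (s - (l - Rmin d1 d2)) (r + Rmin d1 d2 - s)).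
  assert (Hm4 := Rmin_r (s - (l - Rmin d1 d2)) (r + Rmin d1 d2 - s)).
  destruct (Rle_lt_dec y l).
  - apply H1. unfold disc. rewrite Rabs_left1 by lra. lra.
  - destruct (Rle_lt_dec r y).
    + apply H2. unfold disc. rewrite Rabs_right by lra. lra.
    + apply (HI l y r); auto; lra.
Qed.

Lemma differentiable_margin (I : R -> Prop) (f f' : R -> R) m a b :
  is_interval I -> (forall z, I z -> 0 <= z) ->
  (forall z, interior I z -> derivable_pt_lim f z (f' z)) ->
  0 < m <= 1 -> a < b -> interior I (m * a) -> interior I b ->
  0 <= a /\ exists dl, 0 < dl /\
    forall s, m * a - dl < s < b + dl -> derivable_pt_lim f s (f' s).
Proof.
  intros HI HIpos Hder Hm Hab Hma Hb.
  assert (Ha0 : 0 <= a).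
  { destruct Hma as [d Hd].
    assert (H := HIpos _ (Hd (m * a) ltac:(unfold disc; rewrite Rminus_diag, Rabs_R0; apply cond_pos))).
    nra. }
  split; auto.
  destruct (interior_neighbourhood I (m * a) b HI ltac:(nra) Hma Hb) as [dl [Hdl Hnb]].
  exists dl. split; [exact Hdl|]. intros s Hs. apply Hder, Hnb. exact Hs.
Qed.

(* The final bookkeeping: both fractional integrals equal the endpoint terms
   plus remainders, so the deviation is the weighted sum of the remainders. *)
Lemma deviation_estimate (fa fb Ja Jb Ra Rb ta tb ea eb G mt D k B Ka Kb : R) :
  0 < G -> 0 < mt -> 0 < D -> 0 <= ta -> 0 <= tb ->
  G * Ja = mt * ta * (fa + Ra) -> G * Jb = mt * tb * (fb + Rb) ->
  Rabs Ra <= k * ea * (B * Ka) -> Rabs Rb <= k * eb * (B * Kb) ->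
  Rabs ((ta * fa + tb * fb) / D - G / (mt * D) * (Ja + Jb))
    <= k * B / D * (ta * ea * Ka + tb * eb * Kb).
Proof.
  intros HG Hmt HD Hta Htb Ea Eb Ba Bb.
  replace ((ta * fa + tb * fb) / D - G / (mt * D) * (Ja + Jb))
    with (- (ta * Ra + tb * Rb) / D).
  2: { replace (G / (mt * D) * (Ja + Jb)) with ((G * Ja + G * Jb) / (mt * D)) by (field; lra).
       rewrite Ea, Eb. field. lra. }
  unfold Rdiv. rewrite Rabs_mult, Rabs_Ropp, (Rabs_right (/ D))
    by (apply Rle_ge; left; apply Rinv_0_lt_compat; auto).
  replace (k * B * / D * (ta * ea * Ka + tb * eb * Kb))
    with ((ta * (k * ea * (B * Ka)) + tb * (k * eb * (B * Kb))) * / D) by ring.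
  apply Rmult_le_compat_r. { left; apply Rinv_0_lt_compat; auto. }
  eapply Rle_trans. apply Rabs_triang. rewrite !Rabs_mult, (Rabs_right ta), (Rabs_right tb) by lra.
  apply Rplus_le_compat; apply Rmult_le_compat_l; auto.
Qed.

Theorem mainTheorem13
  (I : R -> Prop) (f f' : R -> R) (m alpha a b q p : R)
  (HI : is_interval I) (HIpos : forall z, I z -> 0 <= z)
  (Hder : forall z, interior I z -> derivable_pt_lim f z (f' z))
  (Hm : 0 < m <= 1) (Halpha : 0 <= alpha <= 1)
  (Hab : a < b) (Hma : interior I (m * a)) (Hb : interior I b)
  (Hconv : alpha_m_convex alpha m (fun z => m * a <= z <= b)
             (fun z => rpow (Rabs (f' z)) q))
  (Hq : 1 < q) (Hp : p = q / (q - 1)) :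
  forall x theta, a <= x <= b -> 0 < theta ->
    Rabs ((rpow (x - a) theta * f (m * a) + rpow (b - x) theta * f (m * b)) / (b - a)
          - Gamma (theta + 1) / (rpow m theta * (b - a))
            * (Jleft theta f (m * a) (m * x) + Jright theta f (m * x) (m * b)))
    <= m * rpow (/ theta * Beta (p + 1) (/ theta)) (/ p) / (b - a)
       * (rpow (x - a) (theta + 1)
            * rpow ((rpow (Rabs (f' (m * x))) q + alpha * m * rpow (Rabs (f' a)) q)
                    / (alpha + 1)) (/ q)
          + rpow (b - x) (theta + 1)
            * rpow ((rpow (Rabs (f' (m * x))) q + alpha * m * rpow (Rabs (f' b)) q)
                    / (alpha + 1)) (/ q)).
Proof.
  intros x th Hx Hth.
  destruct (differentiable_margin I f f' m a b HI HIpos Hder Hm Hab Hma Hb)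
    as [Ha0 [dl [Hdl Hf]]].
  assert (EL := Jleft_eval f f' th dl (m * a) (m * x) Hth Hdl ltac:(nra)
                  ltac:(intros; apply Hf; nra)).
  assert (ER := Jright_eval f f' th dl (m * x) (m * b) Hth Hdl ltac:(nra)
                  ltac:(intros; apply Hf; nra)).
  replace (m * x - m * a) with (m * (x - a)) in EL by ring.
  replace (m * b - m * x) with (m * (b - x)) in ER by ring.
  rewrite rpow_mult_distr in EL, ER by lra.
  assert (Hd : forall s, m * a <= s <= b -> derivable_pt_lim f s (f' s))
    by (intros; apply Hf; lra).
  assert (BL := segment_remainder_bound f f' m alpha a b q p Hm ltac:(lra) Ha0 Hd Hconv Hq Hp
                  x a th Hx ltac:(lra) Hth).
  assert (BR := segment_remainder_bound f f' m alpha a b q p Hm ltac:(lra) Ha0 Hd Hconv Hq Hp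
                  x b th Hx ltac:(lra) Hth).
  rewrite (Rabs_right (x - a)) in BL by lra.
  rewrite (Rabs_left1 (x - b)), Ropp_minus_distr in BR by lra.
  rewrite (rpow_succ (x - a)), (rpow_succ (b - x)) by lra.
  apply (deviation_estimate _ _ _ _ _ _ _ _ _ _ _ _ _ _ _ _ _
           (proj1 (Gamma_recursion (th + 1) ltac:(lra))) (rpow_gt0 m th ltac:(lra))
           (proj2 (Rlt_0_minus a b) Hab) (rpow_ge0 _ _) (rpow_ge0 _ _) EL ER BL BR).
Qed.
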